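(* Let $\theta:\mathbb R\to[0,1]$ be a smooth non-decreasing function with $\theta(t)=0$ for $t\le0$, $\theta(t)>0$ for $t>0$, $\theta(t)=1$ for $t\ge1$. Let $A(x,y)=x\theta(y)+x^2\theta(1-y)$ and consider the sub-Riemannian structure on $\mathbb R^3$ generated by $X=\partial_x$, $Y=\partial_y+A(x,y)\partial_z$, with Hamiltonian $H=\frac12\big(p_x^2+(p_y+A(x,y)p_z)^2\big)$ in coordinates $(x,y,z,p_x,p_y,p_z)$ on $T^*\mathbb R^3$. Fix $T>0$, and for $\alpha\in\mathbb R$ let $\lambda_\alpha$ be the covector $(p_x,p_y,p_z)=(0,1,\alpha)$ at the point $(0,-T,0)$. Define $\Phi:\mathbb R^2\to\mathbb R^3$ by $\Phi(t,\alpha)=\pi\circ e^{(t+T)\vec H}(\lambda_\alpha)$. Then $\Phi$ is an embedding on a neighborhood of any point $(t,0)$ with $t>0$.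
   Context: $\vec H$ denotes the Hamiltonian vector field of $H$ with respect to the canonical symplectic form, i.e. $\dot x=\partial H/\partial p_x$, $\dot p_x=-\partial H/\partial x$, etc.; $e^{s\vec H}$ is its flow and $\pi:T^*\mathbb R^3\to\mathbb R^3$ the projection. *)

From Stdlib Require Import Reals.
From Coquelicot Require Import Coquelicot.
Open Scope R_scope.

Definition smooth (f : R -> R) : Prop := forall (n : nat) (x : R), ex_derive_n f n x.

Definition cutoff (theta : R -> R) : Prop :=
  smooth theta /\
  (forall t, 0 <= theta t <= 1) /\
  (forall s t, s <= t -> theta s <= theta t) /\
  (forall t, t <= 0 -> theta t = 0) /\
  (forall t, 0 < t -> 0 < theta t) /\
  (forall t, 1 <= t -> theta t = 1).

Definition Afun (theta : R -> R) (x y : R) : R :=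
  x * theta y + x ^ 2 * theta (1 - y).

Definition Ham (theta : R -> R) (x y z px py pz : R) : R :=
  / 2 * (px ^ 2 + (py + Afun theta x y * pz) ^ 2).

(** (x,y,z,px,py,pz) : R -> R is an integral curve (defined for all times) of the
    Hamiltonian vector field of H:  q' = dH/dp,  p' = - dH/dq. *)
Definition ham_traj (theta : R -> R) (x y z px py pz : R -> R) : Prop :=
  forall s : R,
    is_derive x s (Derive (fun v => Ham theta (x s) (y s) (z s) v (py s) (pz s)) (px s)) /\
    is_derive y s (Derive (fun v => Ham theta (x s) (y s) (z s) (px s) v (pz s)) (py s)) /\
    is_derive z s (Derive (fun v => Ham theta (x s) (y s) (z s) (px s) (py s) v) (pz s)) /\
    is_derive px s (- Derive (fun v => Ham theta v (y s) (z s) (px s) (py s) (pz s)) (x s)) /\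
    is_derive py s (- Derive (fun v => Ham theta (x s) v (z s) (px s) (py s) (pz s)) (y s)) /\
    is_derive pz s (- Derive (fun v => Ham theta (x s) (y s) v (px s) (py s) (pz s)) (z s)).

(** F is an embedding on U: an immersion at every point of U (Frechet
    differentiable with injective differential), injective on U, and a
    homeomorphism of U onto its image (continuity of F follows from
    differentiability; continuity of the inverse is stated explicitly). *)
Definition embedding_on (U : R * R -> Prop) (F : R * R -> R * R * R) : Prop :=
  (forall p, U p ->
     exists L : R * R -> R * R * R,
       is_linear L /\ filterdiff F (locally p) L /\
       (forall v, L v = zero -> v = zero)) /\
  (forall p q, U p -> U q -> F p = F q -> p = q) /\
  (forall p, U p -> forall eps : posreal, exists delta : posreal,
     forall q, U q -> ball (F p) delta (F q) -> ball p eps q).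

(** With [p_z = al] conserved and [h = p_y + al A(x, y)], the Hamiltonian flow is the system
    [x' = p_x, y' = h, p_x' = - al h dA/dx, h' = al p_x dA/dx, z' = h A], on which
    [p_x^2 + h^2 = 1]; at [al = 0] its solution is [x = p_x = z = 0, y = s - T, h = 1].
    Gronwall estimates show that the solution is Lipschitz in [al] and that its difference
    quotients in [al] converge at rate [O(h)], so [Phi] is differentiable with continuous
    partial derivatives.  At [(t, 0)] the Jacobian of the [(x, y)]-part of [Phi] is
    [[0, x_al], [1, y_al]], and [x_al < 0] since [x_al'' = - theta (s - T)] with zero initial
    data.  Hence the [(x, y)]-part of [Phi] is bi-Lipschitz on a small square around [(t, 0)]:
    this gives the immersion, the injectivity and the continuity of the inverse. *)

From Stdlib Require Import Reals Lra Psatz.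
From Coquelicot Require Import Coquelicot.
Open Scope R_scope.

(** * One-variable calculus *)

Lemma is_derive_nonpos_le (g dg : R -> R) a b : a <= b ->
  (forall s, a <= s <= b -> is_derive g s (dg s)) ->
  (forall s, a <= s <= b -> dg s <= 0) -> g b <= g a.
Proof.
  intros Hab Hd Hn. destruct (Req_dec a b) as [->|Hne]; [lra|].
  destruct (MVT_cor2 g dg a b) as [c [Hc1 Hc2]]; [lra| |].
  - intros c Hc. apply is_derive_Reals. apply Hd. lra.
  - assert (dg c <= 0) by (apply Hn; lra). nra.
Qed.

Lemma is_derive_le_sub_le (f df G dG : R -> R) a b : a <= b ->
  (forall s, a <= s <= b -> is_derive f s (df s)) ->
  (forall s, a <= s <= b -> is_derive G s (dG s)) ->
  (forall s, a <= s <= b -> df s <= dG s) -> f b - G b <= f a - G a.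
Proof.
  intros Hab Hf HG Hle.
  apply (is_derive_nonpos_le (fun s => f s - G s) (fun s => df s - dG s) a b Hab).
  - intros s Hs. apply (is_derive_minus f G); auto.
  - intros s Hs. specialize (Hle s Hs). lra.
Qed.

Lemma Rabs_sub_le_derive_bound (f df : R -> R) a b M :
  (forall c, Rmin a b <= c <= Rmax a b -> is_derive f c (df c)) ->
  (forall c, Rmin a b <= c <= Rmax a b -> Rabs (df c) <= M) ->
  Rabs (f b - f a) <= M * Rabs (b - a).
Proof.
  intros Hd Hb. destruct (MVT_abs f df a b) as [c [Hc1 Hc2]].
  - intros c Hc. apply is_derive_Reals. auto.
  - rewrite Hc1. apply Rmult_le_compat_r; [apply Rabs_pos|auto].
Qed.

Lemma is_derive_0_const (g : R -> R) :
  (forall s, is_derive g s 0) -> forall s, g s = g 0.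
Proof.
  intros Hd s.
  assert (H : Rabs (g s - g 0) <= 0 * Rabs (s - 0)).
  { apply (Rabs_sub_le_derive_bound g (fun _ => 0)); intros; [apply Hd|].
    rewrite Rabs_R0; lra. }
  rewrite Rmult_0_l in H. pose proof (Rabs_pos (g s - g 0)).
  assert (E : Rabs (g s - g 0) = 0) by lra.
  apply Rabs_eq_0 in E. lra.
Qed.

Lemma MVT_is_derive (f df : R -> R) a b :
  (forall x, Rmin a b <= x <= Rmax a b -> is_derive f x (df x)) ->
  exists c, Rmin a b <= c <= Rmax a b /\ f b - f a = df c * (b - a).
Proof.
  intros Hd. destruct (MVT_gen f a b df) as [c [Hc E]].
  - intros x Hx. apply Hd. lra.
  - intros x Hx. apply continuity_pt_filterlim.
    apply (ex_derive_continuous (K := R_AbsRing) (V := R_NormedModule)).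
    eexists. apply Hd. exact Hx.
  - exists c. split; auto.
Qed.

Lemma is_derive_ext_value (f : R -> R) (x l l' : R) :
  is_derive f x l -> l = l' -> is_derive f x l'.
Proof. intros H <-. exact H. Qed.

Lemma is_derive_div_const (f : R -> R) (x df c : R) :
  is_derive f x df -> is_derive (fun t => f t / c) x (df / c).
Proof.
  intros H. auto_derive; [eexists; exact H|].
  replace (Derive (fun t => f t) x) with df by (symmetry; apply is_derive_unique; exact H).
  unfold Rdiv; ring.
Qed.

Lemma is_derive_shift (g : R -> R) (x T l : R) :
  is_derive g (x + T) l -> is_derive (fun z => g (z + T)) x l.
Proof.
  intros H. apply (is_derive_ext_value _ _ (1 * l)); [|ring].
  apply (is_derive_comp g (fun z => z + T)); auto.
  auto_derive; auto; ring.
Qed.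

Lemma continuity_bounded_segment (f : R -> R) a b : a <= b ->
  (forall c, a <= c <= b -> continuity_pt f c) ->
  exists M, 0 <= M /\ forall c, a <= c <= b -> Rabs (f c) <= M.
Proof.
  intros Hab Hc.
  destruct (continuity_ab_maj f a b Hab Hc) as [x1 [H1 _]].
  destruct (continuity_ab_maj (fun x => - f x) a b Hab) as [x2 [H2 _]].
  { intros c Hc'. apply continuity_pt_opp. auto. }
  exists (Rabs (f x1) + Rabs (f x2)).
  pose proof (Rabs_pos (f x1)). pose proof (Rabs_pos (f x2)).
  split; [lra|]. intros c Hc'. specialize (H1 c Hc'). specialize (H2 c Hc').
  pose proof (Rle_abs (f x1)). pose proof (Rle_abs (- f x2)) as A2. rewrite Rabs_Ropp in A2.
  apply Rabs_le; lra.
Qed.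

Lemma Rabs_le_between_segment R a b c :
  Rabs a <= R -> Rabs b <= R -> Rmin a b <= c <= Rmax a b -> Rabs c <= R.
Proof.
  intros Ha Hb Hc. apply Rabs_le_between in Ha. apply Rabs_le_between in Hb.
  apply Rabs_le_between. unfold Rmin, Rmax in Hc. destruct (Rle_dec a b); lra.
Qed.

Lemma Rabs_lt_between_segment a b c z r :
  Rmin a b <= c <= Rmax a b -> Rabs (a - z) < r -> Rabs (b - z) < r -> Rabs (c - z) < r.
Proof.
  intros Hc Ha Hb. apply Rabs_def2 in Ha. apply Rabs_def2 in Hb. apply Rabs_def1;
  unfold Rmin, Rmax in Hc; destruct (Rle_dec a b); lra.
Qed.

Lemma Rabs_segment_dist_le a b c :
  Rmin a b <= c <= Rmax a b -> Rabs (c - a) <= Rabs (b - a).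
Proof.
  intros Hc. unfold Rmin, Rmax in Hc. destruct (Rle_dec a b).
  - rewrite !Rabs_right; lra.
  - rewrite !Rabs_left1; lra.
Qed.

Lemma at_right_0_mul_le (C b : R) : 0 < b -> at_right 0 (fun h => C * h <= b).
Proof.
  intros Hb.
  assert (Hd : 0 < b / (Rabs C + 1))
    by (apply Rdiv_lt_0_compat; [lra | pose proof (Rabs_pos C); lra]).
  exists (mkposreal _ Hd). intros h Hh Hpos. simpl in Hh.
  unfold ball in Hh; simpl in Hh; unfold AbsRing_ball, abs, minus, plus, opp in Hh; simpl in Hh.
  rewrite Ropp_0, Rplus_0_r, Rabs_right in Hh by lra.
  eapply Rle_trans; [apply Rle_abs|]. rewrite Rabs_mult, (Rabs_right h) by lra.
  pose proof (Rabs_pos C).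
  apply (Rmult_lt_compat_l (Rabs C + 1)) in Hh; [|lra].
  replace ((Rabs C + 1) * (b / (Rabs C + 1))) with b in Hh by (field; lra). nra.
Qed.

Lemma at_right_0_le (b : R) : 0 < b -> at_right 0 (fun h => h <= b).
Proof.
  intros Hb. eapply filter_imp; [|apply (at_right_0_mul_le 1 b Hb)]. intros h. lra.
Qed.

Lemma at_right_0_pos : at_right 0 (fun h => 0 < h).
Proof. exists (mkposreal 1 Rlt_0_1). intros h _ Hh. exact Hh. Qed.

Lemma is_derive_sum_sq (f g : R -> R) (x df dg : R) : is_derive f x df -> is_derive g x dg ->
  is_derive (fun t => f t ^ 2 + g t ^ 2) x (2 * f x * df + 2 * g x * dg).
Proof.
  intros Hf Hg. auto_derive; [repeat split; eexists; eauto|].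
  replace (Derive (fun t => f t) x) with df by (symmetry; apply is_derive_unique; exact Hf).
  replace (Derive (fun t => g t) x) with dg by (symmetry; apply is_derive_unique; exact Hg).
  ring.
Qed.

Lemma second_order_le (r q g : R -> R) eps m a s0 : 0 <= a <= s0 ->
  (forall s, 0 <= s <= s0 -> is_derive r s (q s)) ->
  (forall s, 0 <= s <= s0 -> is_derive q s (g s)) ->
  r 0 = 0 -> q 0 = 0 ->
  (forall s, 0 <= s <= s0 -> g s <= eps) ->
  (forall s, a <= s <= s0 -> g s <= eps - m) ->
  r s0 <= eps * s0 ^ 2 / 2 - m * (s0 - a) ^ 2 / 2.
Proof.
  intros Ha Hr Hq Hr0 Hq0 Hg Hga.
  assert (Hq1 : forall s, 0 <= s <= s0 -> q s <= eps * s).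
  { intros s Hs.
    assert (E := is_derive_le_sub_le q g (fun s => eps * s) (fun _ => eps) 0 s ltac:(lra)).
    rewrite Hq0 in E. enough (q s - eps * s <= 0 - eps * 0) by lra.
    apply E; intros x Hx; [apply Hq; lra | auto_derive; auto; ring | apply Hg; lra]. }
  assert (Hq2 : forall s, a <= s <= s0 -> q s <= eps * s - m * (s - a)).
  { intros s Hs.
    assert (E := is_derive_le_sub_le q g (fun s => eps * s - m * (s - a)) (fun _ => eps - m)
      a s ltac:(lra)).
    enough (q s - (eps * s - m * (s - a)) <= q a - (eps * a - m * (a - a)))
      by (pose proof (Hq1 a ltac:(lra)); lra).
    apply E; intros x Hx; [apply Hq; lra | auto_derive; auto; ring | apply Hga; lra]. }
  assert (Hra : r a <= eps * a ^ 2 / 2).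
  { assert (E := is_derive_le_sub_le r q (fun s => eps * s ^ 2 / 2) (fun s => eps * s) 0 a
      ltac:(lra)).
    enough (r a - eps * a ^ 2 / 2 <= r 0 - eps * 0 ^ 2 / 2) by (rewrite Hr0 in *; lra).
    apply E; intros x Hx; [apply Hr; lra | auto_derive; auto; field | apply Hq1; lra]. }
  assert (E := is_derive_le_sub_le r q (fun s => eps * s ^ 2 / 2 - m * (s - a) ^ 2 / 2)
    (fun s => eps * s - m * (s - a)) a s0 ltac:(lra)).
  enough (r s0 - (eps * s0 ^ 2 / 2 - m * (s0 - a) ^ 2 / 2) <=
          r a - (eps * a ^ 2 / 2 - m * (a - a) ^ 2 / 2)) by lra.
  apply E; intros x Hx; [apply Hr; lra | auto_derive; auto; field | apply Hq2; lra].
Qed.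

(** * Gronwall estimates *)

Lemma gronwall (G dG : R -> R) K S :
  (forall s, is_derive G s (dG s)) -> (forall s, 0 <= s <= S -> dG s <= K * G s) ->
  forall s, 0 <= s <= S -> G s <= G 0 * exp (K * s).
Proof.
  intros Hd Hle s Hs.
  assert (Hdec : G s * exp (- K * s) <= G 0 * exp (- K * 0)).
  { apply (is_derive_nonpos_le (fun s => G s * exp (- K * s))
      (fun s => (dG s - K * G s) * exp (- K * s))); [lra| |].
    - intros x _. auto_derive; [eexists; apply Hd|].
      replace (Derive (fun x => G x) x) with (dG x) by (symmetry; apply is_derive_unique, Hd). ring.
    - intros x Hx. specialize (Hle x ltac:(lra)). pose proof (exp_pos (- K * x)). nra. }
  replace (- K * 0) with 0 in Hdec by ring. rewrite exp_0, Rmult_1_r in Hdec.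
  replace (G s) with (G s * exp (- K * s) * exp (K * s))
    by (rewrite Rmult_assoc, <- exp_plus; replace (- K * s + K * s) with 0 by ring;
        rewrite exp_0; ring).
  apply Rmult_le_compat_r; [left; apply exp_pos | exact Hdec].
Qed.
Definition sum5 (f : nat -> R) := f 0%nat + f 1%nat + f 2%nat + f 3%nat + f 4%nat.

Lemma sum5_sq_le (a : nat -> R) : sum5 a ^ 2 <= 5 * sum5 (fun i => a i ^ 2).
Proof.
  unfold sum5.
  set (a0 := a 0%nat); set (a1 := a 1%nat); set (a2 := a 2%nat); set (a3 := a 3%nat);
  set (a4 := a 4%nat).
  assert (E : 5 * (a0^2 + a1^2 + a2^2 + a3^2 + a4^2) - (a0 + a1 + a2 + a3 + a4)^2 =
    (a0-a1)^2 + (a0-a2)^2 + (a0-a3)^2 + (a0-a4)^2 + (a1-a2)^2 + (a1-a3)^2 + (a1-a4)^2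
    + (a2-a3)^2 + (a2-a4)^2 + (a3-a4)^2) by ring.
  pose proof (pow2_ge_0 (a0-a1)); pose proof (pow2_ge_0 (a0-a2)); pose proof (pow2_ge_0 (a0-a3));
  pose proof (pow2_ge_0 (a0-a4)); pose proof (pow2_ge_0 (a1-a2)); pose proof (pow2_ge_0 (a1-a3));
  pose proof (pow2_ge_0 (a1-a4)); pose proof (pow2_ge_0 (a2-a3)); pose proof (pow2_ge_0 (a2-a4));
  pose proof (pow2_ge_0 (a3-a4)). lra.
Qed.

Lemma sq_le_sum5 (a : nat -> R) i : (i < 5)%nat -> a i ^ 2 <= sum5 (fun j => a j ^ 2).
Proof.
  intros Hi. unfold sum5.
  pose proof (pow2_ge_0 (a 0%nat)); pose proof (pow2_ge_0 (a 1%nat));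
  pose proof (pow2_ge_0 (a 2%nat)); pose proof (pow2_ge_0 (a 3%nat));
  pose proof (pow2_ge_0 (a 4%nat)).
  destruct i as [|[|[|[|[|i]]]]]; try lia; lra.
Qed.

Lemma sum5_growth (w dw : nat -> R) L c : 0 <= L ->
  (forall i, (i < 5)%nat -> Rabs (dw i) <= L * sum5 (fun j => Rabs (w j)) + c) ->
  2 * sum5 (fun i => w i * dw i) <= (10 * L + 5) * sum5 (fun i => w i ^ 2) + c ^ 2.
Proof.
  intros HL Hb.
  set (sg := sum5 (fun j => Rabs (w j))).
  assert (Hterm : forall i, (i < 5)%nat -> w i * dw i <= Rabs (w i) * (L * sg + c)).
  { intros i Hi. eapply Rle_trans; [apply Rle_abs|]. rewrite Rabs_mult.
    apply Rmult_le_compat_l; [apply Rabs_pos | apply Hb, Hi]. }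
  assert (Hsum : sum5 (fun i => w i * dw i) <= sg * (L * sg + c)).
  { set (M := L * sg + c) in *.
    replace (sg * M) with (sum5 (fun i => Rabs (w i) * M)) by (unfold sg, sum5; ring).
    pose proof (Hterm 0%nat ltac:(lia)); pose proof (Hterm 1%nat ltac:(lia));
    pose proof (Hterm 2%nat ltac:(lia)); pose proof (Hterm 3%nat ltac:(lia));
    pose proof (Hterm 4%nat ltac:(lia)). unfold sum5. lra. }
  assert (Hcs : sg ^ 2 <= 5 * sum5 (fun i => w i ^ 2)).
  { replace (sum5 (fun i => w i ^ 2)) with (sum5 (fun i => Rabs (w i) ^ 2))
      by (unfold sum5; rewrite <- !Rsqr_pow2, <- !Rsqr_abs; reflexivity).
    apply sum5_sq_le. }
  assert (2 * c * sg <= sg ^ 2 + c ^ 2) by (pose proof (pow2_ge_0 (sg - c)); lra).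
  assert (L * sg ^ 2 <= L * (5 * sum5 (fun i => w i ^ 2))) by (apply Rmult_le_compat_l; auto).
  nra.
Qed.

Definition gronwall_const L S := 1 + exp ((10 * L + 5) * S) / (10 * L + 5).

Lemma gronwall_const_nonneg L S : 0 <= L -> 0 <= gronwall_const L S.
Proof.
  intros HL. unfold gronwall_const. pose proof (exp_pos ((10 * L + 5) * S)).
  assert (0 < / (10 * L + 5)) by (apply Rinv_0_lt_compat; lra). unfold Rdiv. nra.
Qed.

Lemma gronwall5_energy (w dw : nat -> R -> R) L c S : 0 <= L ->
  (forall i s, (i < 5)%nat -> is_derive (w i) s (dw i s)) ->
  (forall i, (i < 5)%nat -> w i 0 = 0) ->
  (forall i s, (i < 5)%nat -> 0 <= s <= S ->
     Rabs (dw i s) <= L * sum5 (fun j => Rabs (w j s)) + c) ->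
  forall s, 0 <= s <= S ->
  sum5 (fun j => w j s ^ 2) <= c ^ 2 / (10 * L + 5) * exp ((10 * L + 5) * s).
Proof.
  intros HL Hd H0 Hb s Hs.
  set (K := 10 * L + 5). assert (HK : 0 < K) by (unfold K; lra).
  set (Q := fun s => sum5 (fun j => w j s ^ 2) + c ^ 2 / K).
  assert (HQd : forall s, is_derive Q s (2 * sum5 (fun j => w j s * dw j s))).
  { intros x. unfold Q, sum5.
    pose proof (Hd 0%nat x ltac:(lia)); pose proof (Hd 1%nat x ltac:(lia));
    pose proof (Hd 2%nat x ltac:(lia)); pose proof (Hd 3%nat x ltac:(lia));
    pose proof (Hd 4%nat x ltac:(lia)).
    auto_derive; [repeat split; eexists; eauto|].
    repeat match goal with |- context [Derive (fun x => w ?i x) x] =>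
      replace (Derive (fun x => w i x) x) with (dw i x)
        by (symmetry; apply is_derive_unique; apply Hd; lia) end.
    ring. }
  assert (HQ : Q s <= Q 0 * exp (K * s)).
  { apply (gronwall Q _ K S HQd); [|exact Hs]. intros x Hx.
    assert (E : K * Q x = K * sum5 (fun j => w j x ^ 2) + c ^ 2) by (unfold Q; field; lra).
    rewrite E. apply sum5_growth; [exact HL|]. intros j Hj. apply Hb; auto. }
  assert (HQ0 : Q 0 = c ^ 2 / K) by (unfold Q, sum5; rewrite !H0 by lia; ring).
  assert (0 <= c ^ 2 / K) by (apply Rmult_le_pos; [nra | left; apply Rinv_0_lt_compat; lra]).
  rewrite HQ0 in HQ. unfold Q in HQ. lra.
Qed.

Lemma gronwall5 (w dw : nat -> R -> R) L c S : 0 <= L ->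
  (forall i s, (i < 5)%nat -> is_derive (w i) s (dw i s)) ->
  (forall i, (i < 5)%nat -> w i 0 = 0) ->
  (forall i s, (i < 5)%nat -> 0 <= s <= S ->
     Rabs (dw i s) <= L * sum5 (fun j => Rabs (w j s)) + c) ->
  forall i s, (i < 5)%nat -> 0 <= s <= S -> Rabs (w i s) <= Rabs c * gronwall_const L S.
Proof.
  intros HL Hd H0 Hb i s Hi Hs.
  pose proof (gronwall5_energy w dw L c S HL Hd H0 Hb s Hs) as HQ.
  set (K := 10 * L + 5) in HQ. assert (HK : 0 < K) by (unfold K; lra).
  assert (HE : exp (K * s) <= exp (K * S)).
  { destruct (Req_dec s S) as [->|]; [lra|]. left. apply exp_increasing. nra. }
  set (E := exp (K * S) / K).
  assert (HE0 : 0 <= E) by (unfold E; pose proof (exp_pos (K * S));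
    apply Rmult_le_pos; [lra | left; apply Rinv_0_lt_compat; lra]).
  assert (Hwi : w i s ^ 2 <= c ^ 2 * (1 + E) ^ 2).
  { pose proof (sq_le_sum5 (fun j => w j s) i Hi).
    assert (c ^ 2 / K * exp (K * s) <= c ^ 2 * E).
    { apply Rle_trans with (c ^ 2 / K * exp (K * S)); [|unfold E; right; field; lra].
      apply Rmult_le_compat_l; [|exact HE].
      apply Rmult_le_pos; [nra | left; apply Rinv_0_lt_compat; lra]. }
    assert (c ^ 2 * E <= c ^ 2 * (1 + E) ^ 2) by (apply Rmult_le_compat_l; nra).
    simpl in *. lra. }
  unfold gronwall_const. fold K. fold E.
  rewrite <- (Rabs_right (1 + E)), <- Rabs_mult by lra.
  apply Rsqr_le_abs_0. rewrite !Rsqr_pow2.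
  replace ((c * (1 + E)) ^ 2) with (c ^ 2 * (1 + E) ^ 2) by ring.
  exact Hwi.
Qed.

(** * Difference quotients and local inversion *)

Lemma Rabs_div_sub_le A B h M : h <> 0 ->
  Rabs (A - h * B) <= M * Rabs h -> Rabs (A / h - B) <= M.
Proof.
  intros Hh H. replace (A / h - B) with ((A - h * B) / h) by (field; auto).
  unfold Rdiv. rewrite Rabs_mult, Rabs_inv.
  assert (0 < Rabs h) by (apply Rabs_pos_lt; auto).
  apply (Rmult_le_reg_r (Rabs h)); auto.
  rewrite Rmult_assoc, Rinv_l, Rmult_1_r by lra. exact H.
Qed.

Lemma inv_INR_2_bounds n : 0 < / (INR n + 2) <= 1/2.
Proof.
  pose proof (pos_INR n). split.
  - apply Rinv_0_lt_compat. lra.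
  - unfold Rdiv. rewrite Rmult_1_l. apply Rinv_le_contravar; lra.
Qed.

Lemma is_lim_seq_inv_INR_2 : is_lim_seq (fun n => / (INR n + 2)) 0.
Proof.
  replace (Finite 0) with (Rbar_inv p_infty) by reflexivity.
  apply is_lim_seq_inv; [|discriminate].
  eapply is_lim_seq_plus; [apply is_lim_seq_INR | apply is_lim_seq_const | reflexivity].
Qed.

(** A junk value unless the limit exists, which [ex_lim0_cauchy] provides. *)
Definition lim0 (f : R -> R) := real (Lim_seq (fun n => f (/ (INR n + 2)))).

Lemma ex_lim0_cauchy (f : R -> R) C :
  (forall h k, 0 < Rabs h <= 1/2 -> 0 < Rabs k <= 1/2 ->
     Rabs (f h - f k) <= C * (Rabs h + Rabs k)) ->
  ex_finite_lim_seq (fun n => f (/ (INR n + 2))).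
Proof.
  intros Hf. set (hn := fun n => / (INR n + 2)).
  assert (Hhn : forall n, 0 < Rabs (hn n) <= 1/2).
  { intros n. destruct (inv_INR_2_bounds n). unfold hn. rewrite Rabs_right; lra. }
  assert (HC : 0 <= C).
  { pose proof (Hf (hn 0%nat) (hn 0%nat) (Hhn 0%nat) (Hhn 0%nat)).
    pose proof (Rabs_pos (f (hn 0%nat) - f (hn 0%nat))). destruct (Hhn 0%nat). nra. }
  apply ex_lim_seq_cauchy_corr. intros eps.
  destruct (is_lim_seq_inv_INR_2 (ball 0 (eps / (2 * C + 1)))) as [N HN].
  { exists (mkposreal _ (Rdiv_lt_0_compat eps (2 * C + 1) (cond_pos eps) ltac:(lra))). tauto. }
  exists N. intros n m Hn Hm.
  assert (Hsmall : forall k, (N <= k)%nat -> hn k < eps / (2 * C + 1)).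
  { intros k Hk. specialize (HN k Hk). destruct (inv_INR_2_bounds k).
    unfold ball in HN; simpl in HN; unfold AbsRing_ball, abs, minus, plus, opp in HN;
    simpl in HN. rewrite Ropp_0, Rplus_0_r, Rabs_right in HN by lra. exact HN. }
  pose proof (Hsmall n Hn); pose proof (Hsmall m Hm).
  pose proof (Hf (hn n) (hn m) (Hhn n) (Hhn m)) as Hnm.
  destruct (inv_INR_2_bounds n), (inv_INR_2_bounds m). unfold hn in *.
  rewrite !(Rabs_right (/ _)) in Hnm by lra.
  assert (C * (/ (INR n + 2) + / (INR m + 2)) <= C * (2 * (eps / (2 * C + 1))))
    by (apply Rmult_le_compat_l; lra).
  assert (C * (2 * (eps / (2 * C + 1))) < eps).
  { pose proof (cond_pos eps). apply (Rmult_lt_reg_r (2 * C + 1)); [lra|].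
    replace (C * (2 * (eps / (2 * C + 1))) * (2 * C + 1)) with (2 * C * eps) by (field; lra).
    nra. }
  lra.
Qed.

Lemma lim0_rate (f : R -> R) C :
  (forall h k, 0 < Rabs h <= 1/2 -> 0 < Rabs k <= 1/2 ->
     Rabs (f h - f k) <= C * (Rabs h + Rabs k)) ->
  forall h, 0 < Rabs h <= 1/2 -> Rabs (f h - lim0 f) <= C * Rabs h.
Proof.
  intros Hf h Hh.
  destruct (ex_lim0_cauchy f C Hf) as [l Hl].
  assert (El : lim0 f = l) by (unfold lim0; rewrite (is_lim_seq_unique _ _ Hl); reflexivity).
  rewrite El.
  assert (Hle : Rbar_le (Rabs (f h - l)) (C * Rabs h + C * 0)).
  { apply (is_lim_seq_le (fun n => Rabs (f h - f (/ (INR n + 2))))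
      (fun n => C * Rabs h + C * / (INR n + 2))).
    - intros n. destruct (inv_INR_2_bounds n).
      pose proof (Hf h (/ (INR n + 2)) Hh ltac:(rewrite Rabs_right; lra)).
      rewrite (Rabs_right (/ _)) in H1 by lra. lra.
    - apply (is_lim_seq_abs _ (f h - l)).
      eapply is_lim_seq_minus; [apply is_lim_seq_const | exact Hl | reflexivity].
    - apply is_lim_seq_plus'; [apply is_lim_seq_const|].
      exact (is_lim_seq_scal_l _ C 0 is_lim_seq_inv_INR_2). }
  simpl in Hle. lra.
Qed.

Lemma is_derive_of_rate (g : R -> R) a l C :
  (forall h, 0 < Rabs h <= 1/2 -> Rabs ((g (a + h) - g a) / h - l) <= C * Rabs h) ->
  is_derive g a l.
Proof.
  intros Hrate. apply is_derive_Reals. intros eps Heps.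
  assert (Hev : at_right 0 (fun d => 0 < d /\ d <= 1/2 /\ (Rabs C + 1) * d <= eps / 2)).
  { repeat apply filter_and; [apply at_right_0_pos | apply at_right_0_le; lra |].
    apply at_right_0_mul_le. lra. }
  destruct (filter_ex _ Hev) as (d & Hd0 & Hd1 & Hd2).
  exists (mkposreal d Hd0). intros h Hh0 Hh. simpl in Hh.
  assert (Hh' : 0 < Rabs h <= 1/2) by (split; [apply Rabs_pos_lt; auto | lra]).
  eapply Rle_lt_trans; [apply (Hrate h Hh')|].
  apply Rle_lt_trans with (Rabs C * d).
  - eapply Rle_trans; [apply Rle_abs|]. rewrite Rabs_mult, Rabs_Rabsolu.
    apply Rmult_le_compat_l; [apply Rabs_pos | lra].
  - pose proof (Rabs_pos C). nra.
Qed.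

(** A perturbation of the matrix [[0, v], [1, w]] with [v <= -c] is uniformly invertible. *)
Lemma perturbed_antidiagonal_inverse_bound c Cv eps a11 a12 a21 a22 v a b m :
  0 < c -> 0 <= Cv -> 0 <= eps <= 1/2 -> eps * (1 + 2 * Cv) <= c / 2 ->
  Rabs a11 <= eps -> Rabs (a12 - v) <= eps -> v <= - c ->
  Rabs (a21 - 1) <= eps -> Rabs a22 <= Cv ->
  Rabs (a11 * a + a12 * b) <= m -> Rabs (a21 * a + a22 * b) <= m ->
  Rabs a <= (2 + 4 / c + 8 * Cv / c) * m /\ Rabs b <= (2 + 4 / c + 8 * Cv / c) * m.
Proof.
  intros Hc HCv Heps Heps2 H11 H12 Hv H21 H22 HX HY.
  assert (Heps3 : eps <= c / 2) by (assert (0 <= eps * Cv) by (apply Rmult_le_pos; lra); lra).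
  set (A := Rabs a). set (B := Rabs b).
  assert (HA : 0 <= A) by apply Rabs_pos. assert (HB : 0 <= B) by apply Rabs_pos.
  assert (Hm : 0 <= m) by (pose proof (Rabs_pos (a21 * a + a22 * b)); lra).
  assert (Y1 : (1 - eps) * A <= m + Cv * B).
  { assert (Rabs (a21 * a) <= m + Rabs (a22 * b)).
    { replace (a21 * a) with ((a21 * a + a22 * b) - a22 * b) by ring.
      eapply Rle_trans; [apply Rabs_triang|]. rewrite Rabs_Ropp. lra. }
    rewrite !Rabs_mult in H.
    assert (1 - eps <= Rabs a21) by (apply Rabs_le_between in H21; rewrite Rabs_right; lra).
    assert (Rabs a22 * Rabs b <= Cv * B) by (apply Rmult_le_compat_r; auto).
    assert ((1 - eps) * A <= Rabs a21 * A) by (apply Rmult_le_compat_r; auto).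
    fold A in H. lra. }
  assert (Y2 : A <= 2 * (m + Cv * B)).
  { assert (0 <= (1 - 2 * eps) * A) by (apply Rmult_le_pos; lra). lra. }
  assert (X1 : (c - eps) * B <= m + eps * A).
  { assert (Rabs (a12 * b) <= m + Rabs (a11 * a)).
    { replace (a12 * b) with ((a11 * a + a12 * b) - a11 * a) by ring.
      eapply Rle_trans; [apply Rabs_triang|]. rewrite Rabs_Ropp. lra. }
    rewrite !Rabs_mult in H.
    assert (c - eps <= Rabs a12) by (apply Rabs_le_between in H12; rewrite Rabs_left1; lra).
    assert (Rabs a11 * Rabs a <= eps * A) by (apply Rmult_le_compat_r; auto).
    assert ((c - eps) * B <= Rabs a12 * B) by (apply Rmult_le_compat_r; auto).
    fold B in H. lra. }
  assert (X2 : c / 2 * B <= 2 * m).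
  { assert (eps * A <= eps * (2 * (m + Cv * B))) by (apply Rmult_le_compat_l; lra).
    assert (0 <= (1 - 2 * eps) * m) by (apply Rmult_le_pos; lra).
    assert (eps * (1 + 2 * Cv) * B <= c / 2 * B) by (apply Rmult_le_compat_r; lra).
    lra. }
  assert (HBm : B <= 4 / c * m).
  { apply (Rmult_le_reg_l (c / 2)); [lra|].
    replace (c / 2 * (4 / c * m)) with (2 * m) by (field; lra). lra. }
  assert (HAm : A <= 2 * m + 8 * Cv / c * m).
  { assert (Cv * B <= Cv * (4 / c * m)) by (apply Rmult_le_compat_l; auto).
    replace (8 * Cv / c * m) with (2 * (Cv * (4 / c * m))) by (field; lra). lra. }
  assert (0 <= 4 / c * m) by (apply Rmult_le_pos; [left; apply Rdiv_lt_0_compat|]; lra).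
  assert (0 <= 8 * Cv / c * m)
    by (apply Rmult_le_pos; [apply Rmult_le_pos; [lra | left; apply Rinv_0_lt_compat; lra]|]; lra).
  split; nra.
Qed.

Lemma Rabs_le_0_eq x : Rabs x <= 0 -> x = 0.
Proof. intros H. apply Rabs_eq_0. pose proof (Rabs_pos x). lra. Qed.

Lemma coercive_injective_inverse_continuous (U : R * R -> Prop) (f g k : R * R -> R) K :
  0 < K ->
  (forall p q, U p -> U q ->
     Rabs (fst p - fst q) <= K * Rmax (Rabs (f p - f q)) (Rabs (g p - g q)) /\
     Rabs (snd p - snd q) <= K * Rmax (Rabs (f p - f q)) (Rabs (g p - g q))) ->
  (forall p q, U p -> U q -> (f p, g p, k p) = (f q, g q, k q) -> p = q) /\
  (forall p, U p -> forall eps : posreal, exists delta : posreal,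
     forall q, U q -> ball (f p, g p, k p) delta (f q, g q, k q) -> ball p eps q).
Proof.
  intros HK Hco. split.
  - intros [p1 p2] [q1 q2] Hp Hq E. injection E as Ef Eg _.
    destruct (Hco _ _ Hp Hq) as [A1 A2]. simpl in A1, A2.
    rewrite Ef, Eg, !Rminus_diag, Rabs_R0, Rmax_left, Rmult_0_r in A1, A2 by lra.
    apply Rabs_le_0_eq in A1, A2. f_equal; lra.
  - intros p Hp eps.
    assert (Hd : 0 < eps / (K + 1)) by (apply Rdiv_lt_0_compat; [apply cond_pos | lra]).
    exists (mkposreal _ Hd). intros q Hq [[Bf Bg] _].
    change (Rabs (f q - f p) < eps / (K + 1)) in Bf.
    change (Rabs (g q - g p) < eps / (K + 1)) in Bg.
    rewrite Rabs_minus_sym in Bf, Bg.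
    destruct (Hco _ _ Hp Hq) as [A1 A2].
    set (m := Rmax (Rabs (f p - f q)) (Rabs (g p - g q))) in *.
    assert (Hm : m < eps / (K + 1)) by (unfold m; apply Rmax_lub_lt; auto).
    assert (HKm : K * m < eps).
    { pose proof (cond_pos eps). pose proof (Rle_trans _ _ _ (Rabs_pos _) (Rmax_l _ _) : 0 <= m).
      apply Rle_lt_trans with (K * (eps / (K + 1))); [apply Rmult_le_compat_l; lra|].
      apply (Rmult_lt_reg_r (K + 1)); [lra|].
      replace (K * (eps / (K + 1)) * (K + 1)) with (K * eps) by (field; lra). nra. }
    split; [change (Rabs (fst q - fst p) < eps) | change (Rabs (snd q - snd p) < eps)];
      rewrite Rabs_minus_sym; lra.
Qed.

Definition square (c : R * R) r (q : R * R) :=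
  Rabs (fst q - fst c) < r /\ Rabs (snd q - snd c) < r.

Lemma open_square c r : open (square c r).
Proof.
  intros [x1 x2] [H1 H2]. simpl in H1, H2.
  assert (Hp : 0 < Rmin (r - Rabs (x1 - fst c)) (r - Rabs (x2 - snd c))) by (apply Rmin_pos; lra).
  exists (mkposreal _ Hp). intros [y1 y2] [B1 B2]. unfold square. simpl in *.
  unfold ball in B1, B2; simpl in B1, B2.
  unfold AbsRing_ball, abs, minus, plus, opp in B1, B2; simpl in B1, B2.
  pose proof (Rmin_l (r - Rabs (x1 - fst c)) (r - Rabs (x2 - snd c))).
  pose proof (Rmin_r (r - Rabs (x1 - fst c)) (r - Rabs (x2 - snd c))).
  split.
  - replace (y1 - fst c) with ((y1 - x1) + (x1 - fst c)) by ring.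
    eapply Rle_lt_trans; [apply Rabs_triang|]. unfold Rminus in *. lra.
  - replace (y2 - snd c) with ((y2 - x2) + (x2 - snd c)) by ring.
    eapply Rle_lt_trans; [apply Rabs_triang|]. unfold Rminus in *. lra.
Qed.

Lemma square_center c r : 0 < r -> square c r c.
Proof. intros Hr. unfold square. rewrite !Rminus_diag, Rabs_R0. lra. Qed.

Lemma filterdiff_pair {K : AbsRing} {U V W : NormedModule K} (F : (U -> Prop) -> Prop)
  {FF : Filter F} (f : U -> V) (g : U -> W) lf lg :
  filterdiff f F lf -> filterdiff g F lg ->
  filterdiff (fun x => (f x, g x)) F (fun x => (lf x, lg x)).
Proof.
  intros Hf Hg.
  apply (filterdiff_comp_2 f g (fun a b => (a, b)) lf lg (fun a b => (a, b))); auto.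
  eapply filterdiff_ext_lin; [eapply filterdiff_ext; [|apply filterdiff_id]|].
  - intros [a b]; reflexivity.
  - intros [a b]; reflexivity.
Qed.

(** * Taylor certificates *)

(** [expansion K B F F' dF d]: [F], [F'] are the values of a function at two points at
    distance [d] and [dF] is its differential at the first point applied to their difference.
    The certificate bounds the values by [B] and the Taylor remainder by [K d^2]; it is
    stable under sums and products, which gives Taylor estimates for polynomials in [theta]. *)
Definition expansion (K B F F' dF d : R) :=
  0 <= K /\ 0 <= d /\ Rabs F <= B /\ Rabs F' <= B /\ Rabs (F' - F) <= K * d /\
  Rabs dF <= K * d /\ Rabs (F' - F - dF) <= K * d ^ 2.

Lemma Rabs_mult_le a b A B : Rabs a <= A -> Rabs b <= B -> Rabs (a * b) <= A * B.
Proof. intros Ha Hb. rewrite Rabs_mult. apply Rmult_le_compat; auto using Rabs_pos. Qed.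

Lemma expansion_mul K1 B1 F F' dF K2 B2 G G' dG d :
  expansion K1 B1 F F' dF d -> expansion K2 B2 G G' dG d ->
  expansion (K1 * K2 + B1 * K2 + B2 * K1) (B1 * B2) (F * G) (F' * G') (F * dG + G * dF) d.
Proof.
  intros (HK1 & Hd & HF & HF' & HF1 & HdF & HR1) (HK2 & _ & HG & HG' & HG1 & HdG & HR2).
  assert (0 <= B1) by (pose proof (Rabs_pos F); lra).
  assert (0 <= B2) by (pose proof (Rabs_pos G); lra).
  assert (0 <= K1 * K2 * d) by (repeat apply Rmult_le_pos; lra).
  split; [nra|]. split; [exact Hd|].
  split; [apply Rabs_mult_le; auto|]. split; [apply Rabs_mult_le; auto|].
  split.
  { replace (F' * G' - F * G) with ((F' - F) * G' + F * (G' - G)) by ring.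
    eapply Rle_trans; [apply Rabs_triang|].
    pose proof (Rabs_mult_le _ _ _ _ HF1 HG'). pose proof (Rabs_mult_le _ _ _ _ HF HG1). nra. }
  split.
  { eapply Rle_trans; [apply Rabs_triang|].
    pose proof (Rabs_mult_le _ _ _ _ HF HdG). pose proof (Rabs_mult_le _ _ _ _ HG HdF). nra. }
  replace (F' * G' - F * G - (F * dG + G * dF))
    with ((F' - F) * (G' - G) + F * (G' - G - dG) + G * (F' - F - dF)) by ring.
  eapply Rle_trans; [apply Rabs_triang|].
  eapply Rle_trans; [apply Rplus_le_compat_r, Rabs_triang|].
  pose proof (Rabs_mult_le _ _ _ _ HF1 HG1). pose proof (Rabs_mult_le _ _ _ _ HF HR2).
  pose proof (Rabs_mult_le _ _ _ _ HG HR1). nra.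
Qed.

Lemma expansion_add K1 B1 F F' dF K2 B2 G G' dG d :
  expansion K1 B1 F F' dF d -> expansion K2 B2 G G' dG d ->
  expansion (K1 + K2) (B1 + B2) (F + G) (F' + G') (dF + dG) d.
Proof.
  intros (HK1 & Hd & HF & HF' & HF1 & HdF & HR1) (HK2 & _ & HG & HG' & HG1 & HdG & HR2).
  unfold expansion.
  replace (F' + G' - (F + G)) with ((F' - F) + (G' - G)) by ring.
  replace (F' - F + (G' - G) - (dF + dG)) with ((F' - F - dF) + (G' - G - dG)) by ring.
  repeat split; try lra; (eapply Rle_trans; [apply Rabs_triang | lra]).
Qed.

Lemma expansion_opp K B F F' dF d :
  expansion K B F F' dF d -> expansion K B (- F) (- F') (- dF) d.
Proof.
  intros (HK & Hd & HF & HF' & HF1 & HdF & HR). unfold expansion.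
  replace (- F' - - F) with (- (F' - F)) by ring.
  replace (- (F' - F) - - dF) with (- (F' - F - dF)) by ring.
  rewrite !Rabs_Ropp. tauto.
Qed.

Lemma expansion_const c d : 0 <= d -> expansion 0 (Rabs c) c c 0 d.
Proof.
  intros Hd. unfold expansion. rewrite !Rminus_diag, ?Rminus_0_r, Rabs_R0.
  pose proof (pow2_ge_0 d). repeat split; lra.
Qed.

Lemma expansion_coord v v' B d : Rabs v <= B -> Rabs v' <= B -> Rabs (v' - v) <= d ->
  expansion 1 B v v' (v' - v) d.
Proof.
  intros H1 H2 H3. pose proof (Rabs_pos (v' - v)). pose proof (pow2_ge_0 d).
  unfold expansion. rewrite Rminus_diag, Rabs_R0. repeat split; lra.
Qed.

Lemma expansion_ext K B F F' dF d F2 F2' dF2 :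
  expansion K B F F' dF d -> F = F2 -> F' = F2' -> dF = dF2 -> expansion K B F2 F2' dF2 d.
Proof. intros H -> -> ->. exact H. Qed.

Lemma expansion_weaken K B F F' dF d K' B' :
  expansion K B F F' dF d -> K <= K' -> B <= B' -> expansion K' B' F F' dF d.
Proof.
  intros (HK & Hd & HF & HF' & HF1 & HdF & HR) H1 H2.
  assert (K * d <= K' * d) by (apply Rmult_le_compat_r; lra).
  assert (K * d ^ 2 <= K' * d ^ 2) by (apply Rmult_le_compat_r; [apply pow2_ge_0 | lra]).
  repeat split; lra.
Qed.

(** The same for the differential alone, applied to a vector of size [dn]. *)
Definition linear_bound (K B F dF dn : R) := 0 <= K /\ Rabs F <= B /\ Rabs dF <= K * dn.

Lemma linear_bound_mul K1 B1 F dF K2 B2 G dG dn : 0 <= dn ->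
  linear_bound K1 B1 F dF dn -> linear_bound K2 B2 G dG dn ->
  linear_bound (B1 * K2 + B2 * K1) (B1 * B2) (F * G) (F * dG + G * dF) dn.
Proof.
  intros Hd (HK1 & HF & HdF) (HK2 & HG & HdG).
  assert (0 <= B1) by (pose proof (Rabs_pos F); lra).
  assert (0 <= B2) by (pose proof (Rabs_pos G); lra).
  split; [nra|]. split; [apply Rabs_mult_le; auto|].
  eapply Rle_trans; [apply Rabs_triang|].
  pose proof (Rabs_mult_le _ _ _ _ HF HdG). pose proof (Rabs_mult_le _ _ _ _ HG HdF). nra.
Qed.

Lemma linear_bound_add K1 B1 F dF K2 B2 G dG dn :
  linear_bound K1 B1 F dF dn -> linear_bound K2 B2 G dG dn ->
  linear_bound (K1 + K2) (B1 + B2) (F + G) (dF + dG) dn.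
Proof.
  intros (HK1 & HF & HdF) (HK2 & HG & HdG).
  split; [lra|]. split; (eapply Rle_trans; [apply Rabs_triang | lra]).
Qed.

Lemma linear_bound_opp K B F dF dn :
  linear_bound K B F dF dn -> linear_bound K B (- F) (- dF) dn.
Proof. unfold linear_bound. rewrite !Rabs_Ropp. tauto. Qed.

Lemma linear_bound_const c dn : 0 <= dn -> linear_bound 0 (Rabs c) c 0 dn.
Proof. intros. split; [lra|]. rewrite Rabs_R0. lra. Qed.

Lemma linear_bound_coord v dv B dn : Rabs v <= B -> Rabs dv <= dn -> linear_bound 1 B v dv dn.
Proof. intros. split; [lra|]. split; lra. Qed.

Lemma linear_bound_ext K B F dF dn F2 dF2 :
  linear_bound K B F dF dn -> F = F2 -> dF = dF2 -> linear_bound K B F2 dF2 dn.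
Proof. intros H -> ->. exact H. Qed.

(** * The reduced vector field *)

Section Cutoff.
Variable theta : R -> R.
Hypothesis Hcut : cutoff theta.

Definition dtheta y := Derive theta y.
Definition d2theta y := Derive (Derive theta) y.

Lemma is_derive_theta y : is_derive theta y (dtheta y).
Proof. destruct Hcut as [Hs _]. apply Derive_correct. exact (Hs 1%nat y). Qed.

Lemma is_derive_dtheta y : is_derive dtheta y (d2theta y).
Proof. destruct Hcut as [Hs _]. apply Derive_correct. exact (Hs 2%nat y). Qed.

Lemma continuity_d2theta y : continuity_pt d2theta y.
Proof.
  destruct Hcut as [Hs _]. apply continuity_pt_filterlim.
  apply (ex_derive_continuous (K := R_AbsRing) (V := R_NormedModule)). exact (Hs 3%nat y).
Qed.

Lemma continuity_dtheta y : continuity_pt dtheta y.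
Proof.
  apply continuity_pt_filterlim.
  apply (ex_derive_continuous (K := R_AbsRing) (V := R_NormedModule)).
  eexists. apply is_derive_dtheta.
Qed.

Lemma theta_range y : 0 <= theta y <= 1.
Proof. destruct Hcut as (_ & H & _). apply H. Qed.

Lemma dtheta_bounded Rr : 0 <= Rr -> exists M, 0 <= M /\
  forall y, Rabs y <= Rr -> Rabs (dtheta y) <= M /\ Rabs (d2theta y) <= M.
Proof.
  intros HR.
  destruct (continuity_bounded_segment dtheta (-Rr) Rr ltac:(lra)) as [M1 [HM1 H1]].
  { intros; apply continuity_dtheta. }
  destruct (continuity_bounded_segment d2theta (-Rr) Rr ltac:(lra)) as [M2 [HM2 H2]].
  { intros; apply continuity_d2theta. }
  exists (M1 + M2). split; [lra|]. intros y Hy. apply Rabs_le_between in Hy.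
  specialize (H1 y ltac:(lra)). specialize (H2 y ltac:(lra)). lra.
Qed.

Section Bounded.
Variables Rr M : R.
Hypothesis HM : 0 <= M.
Hypothesis Hbound : forall v, Rabs v <= Rr -> Rabs (dtheta v) <= M /\ Rabs (d2theta v) <= M.

Lemma expansion_theta y y' d :
  Rabs y <= Rr -> Rabs y' <= Rr -> Rabs (y' - y) <= d ->
  expansion M 1 (theta y) (theta y') (dtheta y * (y' - y)) d.
Proof.
  intros Hy Hy' Hd.
  assert (0 <= d) by (pose proof (Rabs_pos (y' - y)); lra).
  assert (Hyd : Rabs (y' - y) * Rabs (y' - y) <= d ^ 2).
  { apply Rsqr_incr_1 in Hd; [|apply Rabs_pos|lra]. unfold Rsqr in Hd. nra. }
  pose proof (theta_range y). pose proof (theta_range y').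
  split; [lra|]. split; [lra|].
  split; [rewrite Rabs_right; lra|]. split; [rewrite Rabs_right; lra|].
  split.
  { eapply Rle_trans; [apply (Rabs_sub_le_derive_bound theta dtheta y y' M)|].
    - intros; apply is_derive_theta.
    - intros c Hc. apply Hbound. apply (Rabs_le_between_segment Rr y y'); auto.
    - apply Rmult_le_compat_l; auto. }
  split.
  { rewrite Rabs_mult. apply Rmult_le_compat; auto using Rabs_pos. apply Hbound; auto. }
  replace (theta y' - theta y - dtheta y * (y' - y)) with
     ((theta y' - dtheta y * y') - (theta y - dtheta y * y)) by ring.
  eapply Rle_trans.
  { apply (Rabs_sub_le_derive_bound (fun v => theta v - dtheta y * v)
      (fun v => dtheta v - dtheta y) y y' (M * Rabs (y' - y))).
    - intros c _.
      replace (dtheta c - dtheta y) with (dtheta c - dtheta y * 1) by ring.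
      apply (is_derive_minus theta (fun v => dtheta y * v)); [apply is_derive_theta|].
      auto_derive; [auto|ring].
    - intros c Hc. eapply Rle_trans.
      + apply (Rabs_sub_le_derive_bound dtheta d2theta y c M).
        * intros; apply is_derive_dtheta.
        * intros c' Hc'. apply Hbound. apply (Rabs_le_between_segment Rr y c); auto.
          apply (Rabs_le_between_segment Rr y y'); auto.
      + apply Rmult_le_compat_l; auto. apply Rabs_segment_dist_le; auto. }
  rewrite Rmult_assoc. apply Rmult_le_compat_l; auto.
Qed.

Lemma linear_bound_theta y dy dn :
  Rabs y <= Rr -> Rabs dy <= dn -> linear_bound M 1 (theta y) (dtheta y * dy) dn.
Proof.
  intros Hy Hd. split; [auto|]. split.
  - pose proof (theta_range y). rewrite Rabs_right; lra.
  - rewrite Rabs_mult. apply Rmult_le_compat; auto using Rabs_pos. apply Hbound; auto.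
Qed.

End Bounded.

Definition Ax x y := theta y + 2 * x * theta (1 - y).
Definition dAx x y dx dy :=
  dtheta y * dy + 2 * dx * theta (1 - y) - 2 * x * dtheta (1 - y) * dy.
Definition dA x y dx dy :=
  dx * theta y + x * dtheta y * dy + 2 * x * dx * theta (1 - y) - x ^ 2 * dtheta (1 - y) * dy.

(** The Hamiltonian vector field with [p_z = al] conserved, in the variables
    [(x, y, p, h, z)], where [p = p_x] and [h = p_y + al A(x, y)]. *)
Definition vf (i : nat) (x y p h z al : R) : R :=
  match i with
  | 0%nat => p
  | 1%nat => h
  | 2%nat => - (al * h * Ax x y)
  | 3%nat => al * p * Ax x y
  | _ => h * Afun theta x y
  end.

Definition dvf (i : nat) (x y p h z al dx dy dp dh dz dal : R) : R :=
  match i with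
  | 0%nat => dp
  | 1%nat => dh
  | 2%nat => - (dal * h * Ax x y + al * dh * Ax x y + al * h * dAx x y dx dy)
  | 3%nat => dal * p * Ax x y + al * dp * Ax x y + al * p * dAx x y dx dy
  | _ => dh * Afun theta x y + h * dA x y dx dy
  end.

Lemma dvf_scale i x y p h z al c a0 a1 a2 a3 a4 a5 :
  dvf i x y p h z al (c * a0) (c * a1) (c * a2) (c * a3) (c * a4) (c * a5) =
  c * dvf i x y p h z al a0 a1 a2 a3 a4 a5.
Proof. destruct i as [|[|[|[|i]]]]; simpl; unfold dAx, dA; ring. Qed.

Lemma dvf_sub i x y p h z al a0 a1 a2 a3 a4 a5 b0 b1 b2 b3 b4 b5 :
  dvf i x y p h z al (a0 - b0) (a1 - b1) (a2 - b2) (a3 - b3) (a4 - b4) (a5 - b5) =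
  dvf i x y p h z al a0 a1 a2 a3 a4 a5 - dvf i x y p h z al b0 b1 b2 b3 b4 b5.
Proof. destruct i as [|[|[|[|i]]]]; simpl; unfold dAx, dA; ring. Qed.

Definition box Rr x y p h al :=
  Rabs x <= Rr /\ Rabs y <= Rr /\ Rabs p <= 1 /\ Rabs h <= 1 /\ Rabs al <= 1.

Definition norm6 a b c d e f := Rabs a + Rabs b + Rabs c + Rabs d + Rabs e + Rabs f.

Lemma norm6_bounds a b c d e f : let n := norm6 a b c d e f in
  0 <= n /\ Rabs a <= n /\ Rabs b <= n /\ Rabs c <= n /\ Rabs d <= n /\ Rabs e <= n /\
  Rabs f <= n.
Proof.
  unfold norm6. pose proof (Rabs_pos a); pose proof (Rabs_pos b); pose proof (Rabs_pos c);
  pose proof (Rabs_pos d); pose proof (Rabs_pos e); pose proof (Rabs_pos f). lra.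
Qed.

Lemma Rabs_1_sub_le Rr y : Rabs y <= Rr -> Rabs (1 - y) <= Rr + 1.
Proof.
  intros Hy. eapply Rle_trans; [apply Rabs_triang|]. rewrite Rabs_Ropp, Rabs_R1. lra.
Qed.

Lemma coefficient_expansions Rr : 0 <= Rr -> exists Ka Ba Kb Bb KA BA,
  forall x y p h z al x' y' p' h' z' al', box Rr x y p h al -> box Rr x' y' p' h' al' ->
  let d := norm6 (x' - x) (y' - y) (p' - p) (h' - h) (z' - z) (al' - al) in
  expansion Ka Ba (Ax x y) (Ax x' y') (dAx x y (x' - x) (y' - y)) d /\
  expansion Kb Bb (al * h) (al' * h') (al * (h' - h) + h * (al' - al)) d /\
  expansion KA BA (Afun theta x y) (Afun theta x' y') (dA x y (x' - x) (y' - y)) d.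
Proof.
  intros HR. destruct (dtheta_bounded (Rr + 1) ltac:(lra)) as [M [HM HB]].
  do 6 eexists. intros x y p h z al x' y' p' h' z' al'
    (Hx & Hy & Hp & Hh & Hal) (Hx' & Hy' & Hp' & Hh' & Hal') d.
  destruct (norm6_bounds (x' - x) (y' - y) (p' - p) (h' - h) (z' - z) (al' - al))
    as (Hd & Dx & Dy & _ & Dh & _ & Dal). fold d in Hd, Dx, Dy, Dh, Dal.
  assert (Dy1 : Rabs ((1 - y') - (1 - y)) <= d)
    by (replace ((1 - y') - (1 - y)) with (- (y' - y)) by ring; rewrite Rabs_Ropp; lra).
  pose proof (expansion_theta _ _ HM HB y y' d ltac:(lra) ltac:(lra) Dy) as T1.
  pose proof (expansion_theta _ _ HM HB (1 - y) (1 - y') d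
    (Rabs_1_sub_le _ _ Hy) (Rabs_1_sub_le _ _ Hy') Dy1) as T2.
  pose proof (expansion_coord x x' Rr d Hx Hx' Dx) as EX.
  pose proof (expansion_coord h h' 1 d Hh Hh' Dh) as EH.
  pose proof (expansion_coord al al' 1 d Hal Hal' Dal) as EAL.
  pose proof (expansion_mul _ _ _ _ _ _ _ _ _ _ _
    (expansion_mul _ _ _ _ _ _ _ _ _ _ _ (expansion_const 2 d Hd) EX) T2) as E2xT.
  pose proof (expansion_mul _ _ _ _ _ _ _ _ _ _ _ EX EX) as Exx.
  split; [|split].
  - eapply expansion_ext; [exact (expansion_add _ _ _ _ _ _ _ _ _ _ _ T1 E2xT)|..];
      unfold Ax, dAx; ring.
  - eapply expansion_ext; [exact (expansion_mul _ _ _ _ _ _ _ _ _ _ _ EAL EH)|..]; ring.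
  - eapply expansion_ext;
      [exact (expansion_add _ _ _ _ _ _ _ _ _ _ _ (expansion_mul _ _ _ _ _ _ _ _ _ _ _ EX T1)
                (expansion_mul _ _ _ _ _ _ _ _ _ _ _ Exx T2))|..];
      unfold Afun, dA; ring.
Qed.

Lemma vf_component_expansion Rr i : 0 <= Rr -> exists K B,
  forall x y p h z al x' y' p' h' z' al', box Rr x y p h al -> box Rr x' y' p' h' al' ->
  expansion K B (vf i x y p h z al) (vf i x' y' p' h' z' al')
    (dvf i x y p h z al (x' - x) (y' - y) (p' - p) (h' - h) (z' - z) (al' - al))
    (norm6 (x' - x) (y' - y) (p' - p) (h' - h) (z' - z) (al' - al)).
Proof.
  intros HR. destruct (coefficient_expansions Rr HR) as (Ka & Ba & Kb & Bb & KA & BA & G).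
  destruct i as [|[|[|[|i]]]]; do 2 eexists; intros x y p h z al x' y' p' h' z' al' Hb Hb';
    destruct (G _ _ _ _ z _ _ _ _ _ z' _ Hb Hb') as (EAx & Ealh & EA);
    destruct Hb as (_ & _ & Hp & Hh & Hal), Hb' as (_ & _ & Hp' & Hh' & Hal');
    destruct (norm6_bounds (x' - x) (y' - y) (p' - p) (h' - h) (z' - z) (al' - al))
      as (_ & _ & _ & Dp & Dh & _ & Dal);
    pose proof (expansion_coord p p' 1 _ Hp Hp' Dp) as EP;
    pose proof (expansion_coord h h' 1 _ Hh Hh' Dh) as EH;
    pose proof (expansion_coord al al' 1 _ Hal Hal' Dal) as EAL; simpl.
  - exact EP.
  - exact EH.
  - eapply expansion_ext;
      [exact (expansion_opp _ _ _ _ _ _ (expansion_mul _ _ _ _ _ _ _ _ _ _ _ Ealh EAx))|..];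
      ring.
  - eapply expansion_ext; [exact (expansion_mul _ _ _ _ _ _ _ _ _ _ _
      (expansion_mul _ _ _ _ _ _ _ _ _ _ _ EAL EP) EAx)|..]; ring.
  - eapply expansion_ext; [exact (expansion_mul _ _ _ _ _ _ _ _ _ _ _ EH EA)|..]; ring.
Qed.

Lemma vf_expansion Rr : 0 <= Rr -> exists K, 0 <= K /\
  forall x y p h z al x' y' p' h' z' al', box Rr x y p h al -> box Rr x' y' p' h' al' ->
  forall i, (i < 5)%nat ->
  expansion K K (vf i x y p h z al) (vf i x' y' p' h' z' al')
    (dvf i x y p h z al (x' - x) (y' - y) (p' - p) (h' - h) (z' - z) (al' - al))
    (norm6 (x' - x) (y' - y) (p' - p) (h' - h) (z' - z) (al' - al)).
Proof.
  intros HR.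
  destruct (vf_component_expansion Rr 0 HR) as (K0 & B0 & E0).
  destruct (vf_component_expansion Rr 1 HR) as (K1 & B1 & E1).
  destruct (vf_component_expansion Rr 2 HR) as (K2 & B2 & E2).
  destruct (vf_component_expansion Rr 3 HR) as (K3 & B3 & E3).
  destruct (vf_component_expansion Rr 4 HR) as (K4 & B4 & E4).
  set (K := Rabs K0 + Rabs B0 + Rabs K1 + Rabs B1 + Rabs K2 + Rabs B2 + Rabs K3 + Rabs B3
            + Rabs K4 + Rabs B4).
  pose proof (Rabs_pos K0); pose proof (Rabs_pos B0); pose proof (Rabs_pos K1);
  pose proof (Rabs_pos B1); pose proof (Rabs_pos K2); pose proof (Rabs_pos B2);
  pose proof (Rabs_pos K3); pose proof (Rabs_pos B3); pose proof (Rabs_pos K4);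
  pose proof (Rabs_pos B4).
  exists K. split; [unfold K; lra|]. intros x y p h z al x' y' p' h' z' al' Hb Hb' i Hi.
  destruct i as [|[|[|[|[|i]]]]]; try lia; eapply expansion_weaken;
    [apply E0 | | | apply E1 | | | apply E2 | | | apply E3 | | | apply E4 | | ];
    auto; eapply Rle_trans; try apply Rle_abs; unfold K; lra.
Qed.

Lemma coefficient_linear_bounds Rr : 0 <= Rr -> exists Ka Ba KA BA,
  forall x y p h al dx dy dp dh dz dal, box Rr x y p h al ->
  let n := norm6 dx dy dp dh dz dal in
  linear_bound Ka Ba (Ax x y) (dAx x y dx dy) n /\
  linear_bound KA BA (Afun theta x y) (dA x y dx dy) n.
Proof.
  intros HR. destruct (dtheta_bounded (Rr + 1) ltac:(lra)) as [M [HM HB]].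
  do 4 eexists. intros x y p h al dx dy dp dh dz dal (Hx & Hy & _) n.
  destruct (norm6_bounds dx dy dp dh dz dal) as (Hn & Dx & Dy & _). fold n in Hn, Dx, Dy.
  assert (Dy1 : Rabs (- dy) <= n) by (rewrite Rabs_Ropp; lra).
  pose proof (linear_bound_theta _ _ HM HB y dy n ltac:(lra) Dy) as T1.
  pose proof (linear_bound_theta _ _ HM HB (1 - y) (- dy) n (Rabs_1_sub_le _ _ Hy) Dy1) as T2.
  pose proof (linear_bound_coord x dx Rr n Hx Dx) as EX.
  pose proof (linear_bound_mul _ _ _ _ _ _ _ _ _ Hn
    (linear_bound_mul _ _ _ _ _ _ _ _ _ Hn (linear_bound_const 2 n Hn) EX) T2) as E2xT.
  pose proof (linear_bound_mul _ _ _ _ _ _ _ _ _ Hn EX EX) as Exx.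
  split.
  - eapply linear_bound_ext; [exact (linear_bound_add _ _ _ _ _ _ _ _ _ T1 E2xT)|..];
      unfold Ax, dAx; ring.
  - eapply linear_bound_ext; [exact (linear_bound_add _ _ _ _ _ _ _ _ _
      (linear_bound_mul _ _ _ _ _ _ _ _ _ Hn EX T1)
      (linear_bound_mul _ _ _ _ _ _ _ _ _ Hn Exx T2))|..]; unfold Afun, dA; ring.
Qed.

Lemma dvf_component_bound Rr i : 0 <= Rr -> exists K,
  forall x y p h z al dx dy dp dh dz dal, box Rr x y p h al ->
  Rabs (dvf i x y p h z al dx dy dp dh dz dal) <= K * norm6 dx dy dp dh dz dal.
Proof.
  intros HR. destruct (coefficient_linear_bounds Rr HR) as (Ka & Ba & KA & BA & G).
  destruct i as [|[|[|[|i]]]]; eexists; intros x y p h z al dx dy dp dh dz dal Hb;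
    destruct (G _ _ _ _ _ dx dy dp dh dz dal Hb) as (EAx & EA);
    destruct Hb as (_ & _ & Hp & Hh & Hal);
    destruct (norm6_bounds dx dy dp dh dz dal) as (Hn & _ & _ & Dp & Dh & _ & Dal);
    pose proof (linear_bound_coord p dp 1 _ Hp Dp) as EP;
    pose proof (linear_bound_coord h dh 1 _ Hh Dh) as EH;
    pose proof (linear_bound_coord al dal 1 _ Hal Dal) as EAL; simpl.
  - apply EP.
  - apply EH.
  - eapply linear_bound_ext; [exact (linear_bound_opp _ _ _ _ _ (linear_bound_mul _ _ _ _ _ _ _ _ _
      Hn (linear_bound_mul _ _ _ _ _ _ _ _ _ Hn EAL EH) EAx))| reflexivity | ring].
  - eapply linear_bound_ext; [exact (linear_bound_mul _ _ _ _ _ _ _ _ _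
      Hn (linear_bound_mul _ _ _ _ _ _ _ _ _ Hn EAL EP) EAx)| reflexivity | ring].
  - eapply linear_bound_ext;
      [exact (linear_bound_mul _ _ _ _ _ _ _ _ _ Hn EH EA)| reflexivity | ring].
Qed.

Lemma dvf_bound Rr : 0 <= Rr -> exists K, 0 <= K /\
  forall x y p h z al dx dy dp dh dz dal, box Rr x y p h al -> forall i, (i < 5)%nat ->
  Rabs (dvf i x y p h z al dx dy dp dh dz dal) <= K * norm6 dx dy dp dh dz dal.
Proof.
  intros HR.
  destruct (dvf_component_bound Rr 0 HR) as (K0 & E0).
  destruct (dvf_component_bound Rr 1 HR) as (K1 & E1).
  destruct (dvf_component_bound Rr 2 HR) as (K2 & E2).
  destruct (dvf_component_bound Rr 3 HR) as (K3 & E3).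
  destruct (dvf_component_bound Rr 4 HR) as (K4 & E4).
  set (K := Rabs K0 + Rabs K1 + Rabs K2 + Rabs K3 + Rabs K4).
  pose proof (Rabs_pos K0); pose proof (Rabs_pos K1); pose proof (Rabs_pos K2);
  pose proof (Rabs_pos K3); pose proof (Rabs_pos K4).
  exists K. split; [unfold K; lra|]. intros x y p h z al dx dy dp dh dz dal Hb i Hi.
  destruct (norm6_bounds dx dy dp dh dz dal) as (Hn & _).
  destruct i as [|[|[|[|[|i]]]]]; try lia; eapply Rle_trans;
    [apply E0 | | apply E1 | | apply E2 | | apply E3 | | apply E4 | ]; auto;
    apply Rmult_le_compat_r; auto; eapply Rle_trans; try apply Rle_abs; unfold K; lra.
Qed.

End Cutoff.

Section HamiltonianPartials.
Variable theta : R -> R.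
Hypothesis Hcut : cutoff theta.

Lemma Derive_Ham_px x y z px py pz : Derive (fun v => Ham theta x y z v py pz) px = px.
Proof. apply is_derive_unique. unfold Ham. auto_derive; auto; field. Qed.

Lemma Derive_Ham_py x y z px py pz :
  Derive (fun v => Ham theta x y z px v pz) py = py + Afun theta x y * pz.
Proof. apply is_derive_unique. unfold Ham. auto_derive; auto; field. Qed.

Lemma Derive_Ham_pz x y z px py pz :
  Derive (fun v => Ham theta x y z px py v) pz = (py + Afun theta x y * pz) * Afun theta x y.
Proof. apply is_derive_unique. unfold Ham. auto_derive; auto; field. Qed.

Lemma Derive_Ham_z x y z px py pz : Derive (fun v => Ham theta x y v px py pz) z = 0.
Proof. unfold Ham. apply Derive_const. Qed.

Lemma Derive_Ham_x x y z px py pz :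
  Derive (fun v => Ham theta v y z px py pz) x = (py + Afun theta x y * pz) * pz * Ax theta x y.
Proof. apply is_derive_unique. unfold Ham, Afun, Ax. auto_derive; auto; field. Qed.

Lemma Derive_Ham_y x y z px py pz :
  Derive (fun v => Ham theta x v z px py pz) y =
  (py + Afun theta x y * pz) * pz * (x * dtheta theta y - x ^ 2 * dtheta theta (1 - y)).
Proof.
  apply is_derive_unique. unfold Ham, Afun.
  auto_derive.
  - repeat split; try (eexists; apply is_derive_theta; auto); auto.
  - replace (1 + - y) with (1 - y) by ring.
    change (Derive (fun x => theta x)) with (Derive theta). unfold dtheta. field.
Qed.

End HamiltonianPartials.

(** * Dependence of the geodesics on the covector *)

Section Trajectories.
Variable theta : R -> R.
Hypothesis Hcut : cutoff theta.
Variable T : R.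
Hypothesis HT : 0 < T.
Variables X Y Z PX PY PZ : R -> R -> R.
Hypothesis Htraj : forall alpha : R,
  ham_traj theta (X alpha) (Y alpha) (Z alpha) (PX alpha) (PY alpha) (PZ alpha).
Hypothesis Hinit : forall alpha : R,
  X alpha 0 = 0 /\ Y alpha 0 = - T /\ Z alpha 0 = 0 /\
  PX alpha 0 = 0 /\ PY alpha 0 = 1 /\ PZ alpha 0 = alpha.

Definition sol (i : nat) al s :=
  match i with
  | 0%nat => X al s
  | 1%nat => Y al s
  | 2%nat => PX al s
  | 3%nat => PY al s + al * Afun theta (X al s) (Y al s)
  | _ => Z al s
  end.

Definition rhs i al s :=
  vf theta i (sol 0 al s) (sol 1 al s) (sol 2 al s) (sol 3 al s) (sol 4 al s) al.

Lemma PZ_const al s : PZ al s = al.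
Proof.
  assert (H : forall s, is_derive (PZ al) s 0).
  { intros s'. destruct (Htraj al s') as (_ & _ & _ & _ & _ & H).
    rewrite Derive_Ham_z, Ropp_0 in H. exact H. }
  rewrite (is_derive_0_const _ H s). apply Hinit.
Qed.

Lemma is_derive_Afun_traj al s :
  is_derive (fun s => Afun theta (X al s) (Y al s)) s
    (Ax theta (X al s) (Y al s) * PX al s +
     (X al s * dtheta theta (Y al s) - X al s ^ 2 * dtheta theta (1 - Y al s)) *
     (PY al s + Afun theta (X al s) (Y al s) * al)).
Proof.
  destruct (Htraj al s) as (HX & HY & _).
  rewrite Derive_Ham_px in HX. rewrite Derive_Ham_py, PZ_const in HY.
  unfold Afun at 1. auto_derive.
  - repeat split; try (eexists; eassumption); eexists; apply is_derive_theta; auto.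
  - replace (Derive (fun x => X al x) s) with (PX al s)
      by (symmetry; apply is_derive_unique; exact HX).
    replace (Derive (fun x => Y al x) s) with (PY al s + Afun theta (X al s) (Y al s) * al)
      by (symmetry; apply is_derive_unique; exact HY).
    replace (1 + - Y al s) with (1 - Y al s) by ring.
    change (Derive (fun x => theta x)) with (Derive theta). unfold dtheta, Ax. ring.
Qed.

Lemma sol_ode i al s : is_derive (sol i al) s (rhs i al s).
Proof.
  destruct (Htraj al s) as (HX & HY & HZ & HPX & HPY & _).
  rewrite Derive_Ham_px in HX. rewrite Derive_Ham_py in HY. rewrite Derive_Ham_pz in HZ.
  rewrite Derive_Ham_x in HPX. rewrite (Derive_Ham_y theta Hcut) in HPY.
  rewrite PZ_const in HY, HZ, HPX, HPY.
  unfold rhs, vf, sol. destruct i as [|[|[|[|i]]]].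
  - exact HX.
  - eapply is_derive_ext_value; [exact HY | ring].
  - eapply is_derive_ext_value; [exact HPX | ring].
  - eapply is_derive_ext_value.
    + apply (is_derive_plus (PY al) (fun s => al * Afun theta (X al s) (Y al s))); [exact HPY|].
      apply (is_derive_scal (fun s => Afun theta (X al s) (Y al s))), is_derive_Afun_traj.
    + unfold plus, scal, mult; simpl. unfold Ax. ring.
  - eapply is_derive_ext_value; [exact HZ | ring].
Qed.

Lemma sol_init i al : (i < 5)%nat ->
  sol i al 0 = match i with 1%nat => - T | 3%nat => 1 | _ => 0 end.
Proof.
  intros Hi. destruct (Hinit al) as (H0 & H1 & H2 & H3 & H4 & H5).
  unfold sol; destruct i as [|[|[|[|[|i]]]]]; try lia; auto.
  rewrite H4, H0, H1. unfold Afun. ring.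
Qed.

Lemma sol_energy al s : sol 2 al s ^ 2 + sol 3 al s ^ 2 = 1.
Proof.
  set (g := fun s => sol 2 al s ^ 2 + sol 3 al s ^ 2).
  assert (Hd : forall s, is_derive g s 0).
  { intros x. pose proof (sol_ode 2 al x) as D2. pose proof (sol_ode 3 al x) as D3.
    eapply is_derive_ext_value; [apply (is_derive_sum_sq _ _ _ _ _ D2 D3)|].
    unfold rhs, vf. ring. }
  change (g s = 1). rewrite (is_derive_0_const g Hd s). unfold g.
  rewrite !sol_init by lia. ring.
Qed.

Lemma sol_momentum_bound al s : Rabs (sol 2 al s) <= 1 /\ Rabs (sol 3 al s) <= 1.
Proof.
  pose proof (sol_energy al s).
  pose proof (pow2_ge_0 (sol 2 al s)). pose proof (pow2_ge_0 (sol 3 al s)).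
  split; apply Rabs_le; split; nra.
Qed.

Lemma sol_xy_bound al s : Rabs (sol 0 al s) <= Rabs s /\ Rabs (sol 1 al s + T) <= Rabs s.
Proof.
  assert (Hspeed : forall j, (j < 2)%nat -> Rabs (sol j al s - sol j al 0) <= 1 * Rabs (s - 0)).
  { intros j Hj. apply (Rabs_sub_le_derive_bound (sol j al) (rhs j al)); intros; [apply sol_ode|].
    destruct (sol_momentum_bound al c). unfold rhs, vf.
    destruct j as [|[|j]]; try lia; auto. }
  rewrite Rminus_0_r, Rmult_1_l in Hspeed.
  pose proof (Hspeed 0%nat ltac:(lia)). pose proof (Hspeed 1%nat ltac:(lia)).
  rewrite !sol_init in * by lia. rewrite Rminus_0_r in *.
  replace (sol 1 al s - - T) with (sol 1 al s + T) in * by ring. auto.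
Qed.

Lemma sol_in_box S al s : 0 <= S -> Rabs s <= S -> Rabs al <= 1 ->
  box (S + T) (sol 0 al s) (sol 1 al s) (sol 2 al s) (sol 3 al s) al.
Proof.
  intros HS Hs Hal.
  destruct (sol_xy_bound al s) as [B0 B1]. destruct (sol_momentum_bound al s) as [B2 B3].
  split; [lra|]. split; [|split; [lra | split; lra]].
  replace (sol 1 al s) with ((sol 1 al s + T) - T) by ring.
  eapply Rle_trans; [apply Rabs_triang|]. rewrite Rabs_Ropp, (Rabs_right T) by lra. lra.
Qed.

Lemma sol_lipschitz_param S : 0 <= S -> exists C, 0 <= C /\
  forall al be i s, Rabs al <= 1 -> Rabs be <= 1 -> (i < 5)%nat -> 0 <= s <= S ->
  Rabs (sol i be s - sol i al s) <= C * Rabs (be - al).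
Proof.
  intros HS. destruct (vf_expansion theta Hcut (S + T) ltac:(lra)) as [K [HK HF]].
  exists (K * gronwall_const K S).
  split; [apply Rmult_le_pos; auto; apply gronwall_const_nonneg; auto|].
  intros al be i s Hal Hbe Hi Hs.
  pose proof (Rabs_pos (be - al)).
  replace (K * gronwall_const K S * Rabs (be - al))
    with (Rabs (K * Rabs (be - al)) * gronwall_const K S)
    by (rewrite Rabs_right by nra; ring).
  apply (gronwall5 (fun i s => sol i be s - sol i al s) (fun i s => rhs i be s - rhs i al s)
    K (K * Rabs (be - al)) S HK); auto.
  - intros j x Hj. apply (is_derive_minus (sol j be) (sol j al)); apply sol_ode.
  - intros j Hj. rewrite !sol_init by auto. ring.
  - intros j x Hj Hx.
    assert (Hb1 := sol_in_box S al x HS ltac:(rewrite Rabs_right; lra) Hal).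
    assert (Hb2 := sol_in_box S be x HS ltac:(rewrite Rabs_right; lra) Hbe).
    destruct (HF _ _ _ _ (sol 4 al x) _ _ _ _ _ (sol 4 be x) _ Hb1 Hb2 j Hj)
      as (_ & _ & _ & _ & H5 & _).
    unfold rhs. eapply Rle_trans; [exact H5|]. unfold norm6, sum5. lra.
Qed.

Definition diffq h i al s := (sol i (al + h) s - sol i al s) / h.

(** [dvf] along the solution, in the direction of the difference quotients; the last
    component [1] is the variation of [al] itself. *)
Definition rhs_lin h i al s :=
  dvf theta i (sol 0 al s) (sol 1 al s) (sol 2 al s) (sol 3 al s) (sol 4 al s) al
    (diffq h 0 al s) (diffq h 1 al s) (diffq h 2 al s) (diffq h 3 al s) (diffq h 4 al s) 1.

Lemma diffq_rhs_error S : 0 <= S -> exists K1, 0 <= K1 /\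
  forall al h i s, Rabs al <= 1/2 -> 0 < Rabs h <= 1/2 -> (i < 5)%nat -> 0 <= s <= S ->
  Rabs ((rhs i (al + h) s - rhs i al s) / h - rhs_lin h i al s) <= K1 * Rabs h.
Proof.
  intros HS. destruct (vf_expansion theta Hcut (S + T) ltac:(lra)) as [K [HK HF]].
  destruct (sol_lipschitz_param S HS) as [C [HC HL]].
  exists (K * (5 * C + 1) ^ 2). split; [apply Rmult_le_pos; auto; apply pow2_ge_0|].
  intros al h i s Hal Hh Hi Hs.
  assert (Hh0 : h <> 0) by (intro E; rewrite E, Rabs_R0 in Hh; lra).
  assert (Hah : Rabs (al + h) <= 1) by (eapply Rle_trans; [apply Rabs_triang | lra]).
  assert (Hb1 := sol_in_box S al s HS ltac:(rewrite Rabs_right; lra) ltac:(lra)).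
  assert (Hb2 := sol_in_box S (al + h) s HS ltac:(rewrite Rabs_right; lra) Hah).
  destruct (HF _ _ _ _ (sol 4 al s) _ _ _ _ _ (sol 4 (al + h) s) _ Hb1 Hb2 i Hi)
    as (_ & _ & _ & _ & _ & _ & HR).
  set (d := norm6 (sol 0 (al + h) s - sol 0 al s) (sol 1 (al + h) s - sol 1 al s)
    (sol 2 (al + h) s - sol 2 al s) (sol 3 (al + h) s - sol 3 al s)
    (sol 4 (al + h) s - sol 4 al s) (al + h - al)) in HR.
  assert (Hd : d <= (5 * C + 1) * Rabs h).
  { assert (HLj : forall j, (j < 5)%nat -> Rabs (sol j (al + h) s - sol j al s) <= C * Rabs h).
    { intros j Hj. replace h with (al + h - al) at 2 by ring. apply HL; auto; lra. }
    unfold d, norm6. replace (al + h - al) with h by ring.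
    pose proof (HLj 0%nat ltac:(lia)); pose proof (HLj 1%nat ltac:(lia));
    pose proof (HLj 2%nat ltac:(lia)); pose proof (HLj 3%nat ltac:(lia));
    pose proof (HLj 4%nat ltac:(lia)). simpl sol in *. lra. }
  assert (Escal : dvf theta i (sol 0 al s) (sol 1 al s) (sol 2 al s) (sol 3 al s) (sol 4 al s) al
      (sol 0 (al + h) s - sol 0 al s) (sol 1 (al + h) s - sol 1 al s)
      (sol 2 (al + h) s - sol 2 al s) (sol 3 (al + h) s - sol 3 al s)
      (sol 4 (al + h) s - sol 4 al s) (al + h - al) = h * rhs_lin h i al s).
  { unfold rhs_lin. rewrite <- dvf_scale. unfold diffq. f_equal; field; auto. }
  rewrite Escal in HR.
  apply Rabs_div_sub_le; auto. unfold rhs. eapply Rle_trans; [exact HR|].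
  assert (0 <= d) by (apply norm6_bounds).
  assert (d ^ 2 <= ((5 * C + 1) * Rabs h) ^ 2) by (apply pow_incr; lra).
  replace (K * (5 * C + 1) ^ 2 * Rabs h * Rabs h) with (K * ((5 * C + 1) * Rabs h) ^ 2) by ring.
  apply Rmult_le_compat_l; auto.
Qed.

Lemma is_derive_diffq h i al s :
  is_derive (diffq h i al) s ((rhs i (al + h) s - rhs i al s) / h).
Proof.
  apply is_derive_div_const, (is_derive_minus (sol i (al + h)) (sol i al)); apply sol_ode.
Qed.

Lemma diffq_cauchy S : 0 <= S -> exists C2,
  forall al h k i s, Rabs al <= 1/2 -> 0 < Rabs h <= 1/2 -> 0 < Rabs k <= 1/2 ->
  (i < 5)%nat -> 0 <= s <= S ->
  Rabs (diffq h i al s - diffq k i al s) <= C2 * (Rabs h + Rabs k).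
Proof.
  intros HS. destruct (diffq_rhs_error S HS) as [K1 [HK1 HQ]].
  destruct (dvf_bound theta Hcut (S + T) ltac:(lra)) as [K2 [HK2 HD]].
  exists (K1 * gronwall_const K2 S).
  intros al h k i s Hal Hh Hk Hi Hs.
  assert (Hh0 : h <> 0) by (intro E; rewrite E, Rabs_R0 in Hh; lra).
  assert (Hk0 : k <> 0) by (intro E; rewrite E, Rabs_R0 in Hk; lra).
  replace (K1 * gronwall_const K2 S * (Rabs h + Rabs k))
    with (Rabs (K1 * (Rabs h + Rabs k)) * gronwall_const K2 S)
    by (rewrite Rabs_right by (apply Rle_ge, Rmult_le_pos; lra); ring).
  apply (gronwall5 (fun i s => diffq h i al s - diffq k i al s)
    (fun i s => (rhs i (al + h) s - rhs i al s) / h - (rhs i (al + k) s - rhs i al s) / k)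
    K2 (K1 * (Rabs h + Rabs k)) S HK2); auto.
  - intros j x Hj. apply (is_derive_minus (diffq h j al) (diffq k j al)); apply is_derive_diffq.
  - intros j Hj. unfold diffq. rewrite !sol_init by auto. field. auto.
  - intros j x Hj Hx.
    assert (Eh := HQ al h j x Hal Hh Hj Hx). assert (Ek := HQ al k j x Hal Hk Hj Hx).
    assert (Hb := sol_in_box S al x HS ltac:(rewrite Rabs_right; lra) ltac:(lra)).
    assert (HL := HD _ _ _ _ (sol 4 al x) al (diffq h 0 al x - diffq k 0 al x)
      (diffq h 1 al x - diffq k 1 al x) (diffq h 2 al x - diffq k 2 al x)
      (diffq h 3 al x - diffq k 3 al x) (diffq h 4 al x - diffq k 4 al x) (1 - 1) Hb j Hj).
    rewrite dvf_sub in HL. fold (rhs_lin h j al x) (rhs_lin k j al x) in HL.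
    unfold norm6 in HL. rewrite Rminus_diag, Rabs_R0, Rplus_0_r in HL.
    set (A := (rhs j (al + h) x - rhs j al x) / h) in *.
    set (B := (rhs j (al + k) x - rhs j al x) / k) in *.
    replace (A - B) with ((A - rhs_lin h j al x) - (B - rhs_lin k j al x)
      + (rhs_lin h j al x - rhs_lin k j al x)) by ring.
    eapply Rle_trans; [apply Rabs_triang|].
    eapply Rle_trans; [apply Rplus_le_compat_r, Rabs_triang|].
    rewrite Rabs_Ropp. unfold sum5. lra.
Qed.

Definition dsol i al s := lim0 (fun h => diffq h i al s).

Lemma diffq_dsol S : 0 <= S -> exists C2,
  forall al h i s, Rabs al <= 1/2 -> 0 < Rabs h <= 1/2 -> (i < 5)%nat -> 0 <= s <= S ->
  Rabs (diffq h i al s - dsol i al s) <= C2 * Rabs h.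
Proof.
  intros HS. destruct (diffq_cauchy S HS) as [C2 HC].
  exists C2. intros al h i s Hal Hh Hi Hs.
  apply (lim0_rate (fun h => diffq h i al s)); auto.
Qed.

Lemma is_derive_sol_param S al i s : 0 <= S -> Rabs al <= 1/2 -> (i < 5)%nat -> 0 <= s <= S ->
  is_derive (fun a => sol i a s) al (dsol i al s).
Proof.
  intros HS Hal Hi Hs. destruct (diffq_dsol S HS) as [C2 HV].
  apply (is_derive_of_rate _ _ _ C2). intros h Hh. apply (HV al h i s); auto.
Qed.

Lemma dsol_bounded S : 0 <= S -> exists Cv, 0 <= Cv /\
  forall al i s, Rabs al <= 1/2 -> (i < 5)%nat -> 0 <= s <= S -> Rabs (dsol i al s) <= Cv.
Proof.
  intros HS. destruct (sol_lipschitz_param S HS) as [C [HC HL]].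
  destruct (diffq_dsol S HS) as [C2 HV].
  exists (C + Rabs C2 / 2). split; [pose proof (Rabs_pos C2); lra|]. intros al i s Hal Hi Hs.
  assert (Hh : 0 < Rabs (1/2) <= 1/2) by (rewrite Rabs_right; lra).
  assert (A := HV al (1/2) i s Hal Hh Hi Hs). rewrite (Rabs_right (1/2)) in A by lra.
  assert (B : Rabs (diffq (1/2) i al s - 0) <= C).
  { apply Rabs_div_sub_le; [lra|]. rewrite Rmult_0_r, Rminus_0_r.
    assert (Hl : Rabs (al + 1/2) <= 1)
      by (eapply Rle_trans; [apply Rabs_triang|]; rewrite (Rabs_right (1/2)); lra).
    pose proof (HL al (al + 1/2) i s ltac:(lra) Hl Hi Hs) as E.
    replace (al + 1/2 - al) with (1/2) in E by ring. exact E. }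
  rewrite Rminus_0_r in B. pose proof (Rle_abs C2).
  replace (dsol i al s) with (diffq (1/2) i al s - (diffq (1/2) i al s - dsol i al s)) by ring.
  eapply Rle_trans; [apply Rabs_triang|]. rewrite Rabs_Ropp. lra.
Qed.

Lemma sol_param_0 s :
  sol 0 0 s = 0 /\ sol 1 0 s = s - T /\ sol 2 0 s = 0 /\ sol 3 0 s = 1 /\ sol 4 0 s = 0.
Proof.
  assert (Hconst : forall i c, (i < 5)%nat -> (forall x, rhs i 0 x = c) ->
    forall s, sol i 0 s - c * s = sol i 0 0).
  { intros i c Hi Hc s'.
    rewrite (is_derive_0_const (fun x => sol i 0 x - c * x)); [f_equal; ring|].
    intros x. apply (is_derive_ext_value _ _ (rhs i 0 x - c * 1)); [|rewrite Hc; ring].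
    apply (is_derive_minus (sol i 0) (fun x => c * x)); [apply sol_ode|].
    apply (is_derive_scal (fun x => x)), (is_derive_id (K := R_AbsRing)). }
  assert (H2 : forall s, sol 2 0 s = 0).
  { intros s'. pose proof (Hconst 2%nat 0 ltac:(lia) ltac:(intros; unfold rhs, vf; ring) s').
    rewrite sol_init in H by lia. lra. }
  assert (H3 : forall s, sol 3 0 s = 1).
  { intros s'. pose proof (Hconst 3%nat 0 ltac:(lia) ltac:(intros; unfold rhs, vf; ring) s').
    rewrite sol_init in H by lia. lra. }
  assert (H0 : forall s, sol 0 0 s = 0).
  { intros s'. pose proof (Hconst 0%nat 0 ltac:(lia) ltac:(intros; apply H2) s').
    rewrite sol_init in H by lia. lra. }
  assert (H1 : forall s, sol 1 0 s = s - T).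
  { intros s'. pose proof (Hconst 1%nat 1 ltac:(lia) ltac:(intros; apply H3) s').
    rewrite sol_init in H by lia. lra. }
  assert (H4 : forall s, sol 4 0 s = 0).
  { intros s'. pose proof (Hconst 4%nat 0 ltac:(lia)
      ltac:(intros x; unfold rhs, vf; rewrite H0; unfold Afun; ring) s').
    rewrite sol_init in H by lia. lra. }
  auto.
Qed.

Lemma rhs_bounded S : 0 <= S -> exists B,
  forall al i s, Rabs al <= 1 -> (i < 5)%nat -> Rabs s <= S -> Rabs (rhs i al s) <= B.
Proof.
  intros HS. destruct (vf_expansion theta Hcut (S + T) ltac:(lra)) as [K [HK HF]].
  exists K. intros al i s Hal Hi Hs.
  assert (Hb := sol_in_box S al s HS Hs Hal).
  destruct (HF _ _ _ _ (sol 4 al s) _ _ _ _ _ (sol 4 al s) _ Hb Hb i Hi) as (_ & _ & H & _).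
  exact H.
Qed.

Lemma sol_lipschitz S : 0 <= S -> exists C, 0 <= C /\
  forall al be i s s', Rabs al <= 1 -> Rabs be <= 1 -> (i < 5)%nat ->
  0 <= s <= S -> 0 <= s' <= S ->
  Rabs (sol i be s' - sol i al s) <= C * (Rabs (s' - s) + Rabs (be - al)).
Proof.
  intros HS. destruct (sol_lipschitz_param S HS) as [C [HC HL]].
  destruct (rhs_bounded S HS) as [B HB].
  assert (HB0 : 0 <= B) by (pose proof (HB 0 0%nat 0 ltac:(rewrite Rabs_R0; lra) ltac:(lia)
    ltac:(rewrite Rabs_R0; lra)); pose proof (Rabs_pos (rhs 0 0 0)); lra).
  exists (C + B). split; [lra|]. intros al be i s s' Hal Hbe Hi Hs Hs'.
  replace (sol i be s' - sol i al s) with ((sol i be s' - sol i be s) + (sol i be s - sol i al s))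
    by ring.
  eapply Rle_trans; [apply Rabs_triang|].
  assert (E1 : Rabs (sol i be s' - sol i be s) <= B * Rabs (s' - s)).
  { apply (Rabs_sub_le_derive_bound (sol i be) (rhs i be)); intros; [apply sol_ode|].
    apply HB; auto. apply (Rabs_le_between_segment S s s'); try apply Rabs_le; auto; lra. }
  assert (E2 := HL al be i s Hal Hbe Hi Hs).
  pose proof (Rabs_pos (s' - s)). pose proof (Rabs_pos (be - al)). nra.
Qed.

Lemma rhs_lipschitz S : 0 <= S -> exists C, 0 <= C /\
  forall al be i s s', Rabs al <= 1 -> Rabs be <= 1 -> (i < 5)%nat ->
  0 <= s <= S -> 0 <= s' <= S ->
  Rabs (rhs i be s' - rhs i al s) <= C * (Rabs (s' - s) + Rabs (be - al)).
Proof.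
  intros HS. destruct (sol_lipschitz S HS) as [C [HC HJ]].
  destruct (vf_expansion theta Hcut (S + T) ltac:(lra)) as [K [HK HF]].
  exists (K * (5 * C + 1)). split; [nra|]. intros al be i s s' Hal Hbe Hi Hs Hs'.
  assert (Hb1 := sol_in_box S al s HS ltac:(rewrite Rabs_right; lra) Hal).
  assert (Hb2 := sol_in_box S be s' HS ltac:(rewrite Rabs_right; lra) Hbe).
  destruct (HF _ _ _ _ (sol 4 al s) _ _ _ _ _ (sol 4 be s') _ Hb1 Hb2 i Hi)
    as (_ & _ & _ & _ & H & _).
  unfold rhs. eapply Rle_trans; [exact H|]. rewrite Rmult_assoc.
  apply Rmult_le_compat_l; auto. unfold norm6.
  pose proof (HJ al be 0%nat s s' Hal Hbe ltac:(lia) Hs Hs');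
  pose proof (HJ al be 1%nat s s' Hal Hbe ltac:(lia) Hs Hs');
  pose proof (HJ al be 2%nat s s' Hal Hbe ltac:(lia) Hs Hs');
  pose proof (HJ al be 3%nat s s' Hal Hbe ltac:(lia) Hs Hs');
  pose proof (HJ al be 4%nat s s' Hal Hbe ltac:(lia) Hs Hs').
  pose proof (Rabs_pos (s' - s)). pose proof (Rabs_pos (be - al)). simpl sol in *. nra.
Qed.

Lemma diffq_lipschitz S : 0 <= S -> exists C, 0 <= C /\
  forall h al al0 i s s0, 0 < h <= 1/2 -> Rabs al <= 1/2 -> Rabs al0 <= 1/2 -> (i < 5)%nat ->
  0 <= s <= S -> 0 <= s0 <= S ->
  Rabs (diffq h i al s - diffq h i al0 s0) <= 2 * C / h * (Rabs (s - s0) + Rabs (al - al0)).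
Proof.
  intros HS. destruct (sol_lipschitz S HS) as [C [HC HJ]].
  exists C. split; [exact HC|]. intros h al al0 i s s0 Hh Hal Hal0 Hi Hs Hs0.
  replace (diffq h i al s - diffq h i al0 s0) with
    ((sol i (al + h) s - sol i (al0 + h) s0 - (sol i al s - sol i al0 s0)) / h - 0)
    by (unfold diffq; field; lra).
  apply Rabs_div_sub_le; [lra|]. rewrite Rmult_0_r, Rminus_0_r, (Rabs_right h) by lra.
  assert (Hsum : forall a, Rabs a <= 1/2 -> Rabs (a + h) <= 1)
    by (intros a Ha; eapply Rle_trans; [apply Rabs_triang|]; rewrite (Rabs_right h); lra).
  assert (B1 := HJ (al0 + h) (al + h) i s0 s (Hsum al0 Hal0) (Hsum al Hal) Hi Hs0 Hs).
  assert (B2 := HJ al0 al i s0 s ltac:(lra) ltac:(lra) Hi Hs0 Hs).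
  replace (al + h - (al0 + h)) with (al - al0) in B1 by ring.
  eapply Rle_trans; [apply Rabs_triang|]. rewrite Rabs_Ropp.
  replace (2 * C / h * (Rabs (s - s0) + Rabs (al - al0)) * h)
    with (2 * (C * (Rabs (s - s0) + Rabs (al - al0)))) by (field; lra).
  lra.
Qed.

Lemma dsol_continuous S al0 s0 i : 0 <= S -> Rabs al0 <= 1/4 -> 0 <= s0 <= S -> (i < 5)%nat ->
  forall eps, 0 < eps -> exists delta, 0 < delta /\
  forall al s, Rabs (al - al0) < delta -> Rabs (s - s0) < delta -> 0 <= s <= S ->
  Rabs (dsol i al s - dsol i al0 s0) <= eps.
Proof.
  intros HS Hal0 Hs0 Hi eps Heps.
  destruct (diffq_dsol S HS) as [C2 HV]. destruct (diffq_lipschitz S HS) as [C [HC HJ]].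
  assert (Hevh : at_right 0 (fun h => 0 < h /\ h <= 1/4 /\ C2 * h <= eps / 4)).
  { repeat apply filter_and;
      [apply at_right_0_pos | apply at_right_0_le | apply at_right_0_mul_le]; lra. }
  destruct (filter_ex _ Hevh) as (h & Hh0 & Hh1 & Hh2).
  assert (Hevd : at_right 0 (fun d => 0 < d /\ d <= 1/4 /\ 4 * C / h * d <= eps / 2)).
  { repeat apply filter_and;
      [apply at_right_0_pos | apply at_right_0_le | apply at_right_0_mul_le]; lra. }
  destruct (filter_ex _ Hevd) as (delta & Hd0 & Hd1 & Hd2).
  exists delta. split; [lra|]. intros al s Hal Hs Hs'.
  assert (Hal' : Rabs al <= 1/4 + delta).
  { replace al with ((al - al0) + al0) by ring. eapply Rle_trans; [apply Rabs_triang | lra]. }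
  assert (Hh : 0 < Rabs h <= 1/2) by (rewrite Rabs_right; lra).
  assert (A1 := HV al h i s ltac:(lra) Hh Hi Hs').
  assert (A2 := HV al0 h i s0 ltac:(lra) Hh Hi Hs0).
  rewrite (Rabs_right h) in A1, A2 by lra.
  assert (Hd := HJ h al al0 i s s0 ltac:(lra) ltac:(lra) ltac:(lra) Hi Hs' Hs0).
  assert (2 * C / h * (Rabs (s - s0) + Rabs (al - al0)) <= 2 * C / h * (2 * delta)).
  { apply Rmult_le_compat_l; [|lra].
    apply Rmult_le_pos; [lra | left; apply Rinv_0_lt_compat; lra]. }
  replace (dsol i al s - dsol i al0 s0) with
    (- (diffq h i al s - dsol i al s) + (diffq h i al s - diffq h i al0 s0)
     + (diffq h i al0 s0 - dsol i al0 s0)) by ring.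
  eapply Rle_trans; [apply Rabs_triang|].
  eapply Rle_trans; [apply Rplus_le_compat_r, Rabs_triang|]. rewrite Rabs_Ropp.
  replace (2 * C / h * (2 * delta)) with (4 * C / h * delta) in * by (field; lra).
  lra.
Qed.

Lemma h_Ax_lower S : 0 <= S -> exists K, forall al s, 0 <= al <= 1 -> 0 <= s <= S ->
  theta (s - T) - K * al <= sol 3 al s * Ax theta (sol 0 al s) (sol 1 al s).
Proof.
  intros HS. destruct (sol_lipschitz_param S HS) as [C [HC HL]].
  destruct (dtheta_bounded theta Hcut (S + T) ltac:(lra)) as [M1 [HM1 HB]].
  exists (C * (3 + M1)). intros al s Hal Hs.
  assert (Close : forall j, (j < 5)%nat -> Rabs (sol j al s - sol j 0 s) <= C * al).
  { intros j Hj. replace al with (al - 0) at 2 by ring. rewrite <- (Rabs_right (al - 0)) by lra.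
    apply HL; auto; rewrite ?Rabs_R0, ?Rabs_right; lra. }
  destruct (sol_param_0 s) as (E0 & E1 & _ & E3 & _).
  pose proof (Close 0%nat ltac:(lia)) as C0. pose proof (Close 1%nat ltac:(lia)) as C1.
  pose proof (Close 3%nat ltac:(lia)) as C3.
  rewrite E0, Rminus_0_r in C0. rewrite E1 in C1. rewrite E3 in C3.
  destruct (sol_momentum_bound al s) as [_ P3].
  destruct (sol_in_box S al s HS ltac:(rewrite Rabs_right; lra) ltac:(rewrite Rabs_right; lra))
    as (_ & Hy & _).
  assert (Hth : Rabs (theta (sol 1 al s) - theta (s - T)) <= M1 * Rabs (sol 1 al s - (s - T))).
  { apply (Rabs_sub_le_derive_bound theta (dtheta theta)); intros c Hc;
      [apply (is_derive_theta theta Hcut)|].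
    apply HB. apply (Rabs_le_between_segment (S + T) (s - T) (sol 1 al s)); auto.
    apply Rabs_le. lra. }
  assert (M1 * Rabs (sol 1 al s - (s - T)) <= M1 * (C * al)) by (apply Rmult_le_compat_l; auto).
  pose proof (theta_range theta Hcut (sol 1 al s)) as T1.
  pose proof (theta_range theta Hcut (1 - sol 1 al s)) as T2.
  unfold Ax.
  set (w := sol 3 al s) in *. set (x := sol 0 al s) in *.
  set (th := theta (sol 1 al s)) in *. set (th' := theta (1 - sol 1 al s)) in *.
  apply Rabs_le_between in C0, C3, P3, Hth.
  assert (A1 : w * th >= th - C * al) by nra.
  assert (A2 : Rabs (w * (2 * x * th')) <= 2 * (C * al)).
  { rewrite !Rabs_mult, (Rabs_right 2), (Rabs_right th') by lra.
    assert (Rabs w <= 1) by (apply Rabs_le; lra). assert (Rabs x <= C * al) by (apply Rabs_le; lra).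
    pose proof (Rabs_pos w). pose proof (Rabs_pos x).
    assert (Rabs x * th' <= Rabs x) by nra.
    assert (0 <= 2 * Rabs x * th') by (apply Rmult_le_pos; lra).
    assert (Rabs w * (2 * Rabs x * th') <= 2 * Rabs x * th') by nra. lra. }
  apply Rabs_le_between in A2. nra.
Qed.

(** Via the difference quotient at one small [h], whose second derivative is at most
    [K h - theta (s - T)] by [h_Ax_lower]. *)
Lemma dsol_x_neg t : 0 < t -> dsol 0 0 (t + T) < 0.
Proof.
  intros Ht. set (s0 := t + T). assert (HS : 0 <= s0) by (unfold s0; lra).
  destruct (diffq_dsol s0 HS) as [C2 HV].
  destruct (h_Ax_lower s0 HS) as [K HK].
  pose proof Hcut as (_ & _ & Hmono & _ & Hpos & _).
  set (m := theta (t / 2)). assert (Hm : 0 < m) by (apply Hpos; lra).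
  set (b := m * t ^ 2 / 16).
  assert (Hb : 0 < b) by (unfold b; pose proof (pow_lt t 2 Ht); apply Rdiv_lt_0_compat; nra).
  assert (Hev : at_right 0 (fun h => 0 < h /\ h <= 1/2 /\ K * s0 ^ 2 / 2 * h <= b /\
    C2 * h <= b / 2)).
  { repeat apply filter_and;
      [apply at_right_0_pos | apply at_right_0_le | apply at_right_0_mul_le ..];
      lra. }
  destruct (filter_ex _ Hev) as (h & Hh0 & Hh1 & Hh2 & Hh3).
  assert (Hr : sol 0 h s0 / h <= K * h * s0 ^ 2 / 2 - m * (s0 - (T + t / 2)) ^ 2 / 2).
  { apply (second_order_le (fun s => sol 0 h s / h) (fun s => sol 2 h s / h)
      (fun s => - (sol 3 h s * Ax theta (sol 0 h s) (sol 1 h s)))); [unfold s0; lra|..].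
    - intros s _. apply is_derive_div_const, sol_ode.
    - intros s _. eapply is_derive_ext_value; [apply is_derive_div_const, sol_ode|].
      unfold rhs, vf. field. lra.
    - rewrite sol_init by lia. unfold Rdiv. ring.
    - rewrite sol_init by lia. unfold Rdiv. ring.
    - intros s Hs. pose proof (HK h s ltac:(lra) Hs). pose proof (theta_range theta Hcut (s - T)).
      lra.
    - intros s Hs. pose proof (HK h s ltac:(lra) ltac:(unfold s0 in *; lra)).
      assert (m <= theta (s - T)) by (apply Hmono; lra). lra. }
  replace (s0 - (T + t / 2)) with (t / 2) in Hr by (unfold s0; field).
  assert (HVh := HV 0 h 0%nat s0 ltac:(rewrite Rabs_R0; lra) ltac:(rewrite Rabs_right; lra)
    ltac:(lia) ltac:(lra)).
  rewrite (Rabs_right h) in HVh by lra.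
  unfold diffq in HVh. rewrite Rplus_0_l, (proj1 (sol_param_0 s0)), Rminus_0_r in HVh.
  apply Rabs_le_between in HVh. fold s0.
  assert (m * (t / 2) ^ 2 / 2 = 2 * b) by (unfold b; field). lra.
Qed.

Definition near_regular t r al s := Rabs al < r /\ Rabs (s - (t + T)) < r.

(** Uniform invertibility of the [(x, y)]-Jacobian in [(s, al)], with entries taken at four
    independent nearby points, as produced by the mean value theorem. *)
Definition xy_jacobian_bound t r K := forall al1 s1 al2 s2 al3 s3 al4 s4 a b m,
  near_regular t r al1 s1 -> near_regular t r al2 s2 ->
  near_regular t r al3 s3 -> near_regular t r al4 s4 ->
  Rabs (rhs 0 al1 s1 * a + dsol 0 al2 s2 * b) <= m ->
  Rabs (rhs 1 al3 s3 * a + dsol 1 al4 s4 * b) <= m ->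
  Rabs a <= K * m /\ Rabs b <= K * m.

(** At [(t + T, 0)] the matrix is [[0, dsol 0], [1, dsol 1]] with [dsol 0 < 0]. *)
Lemma xy_jacobian_near t : 0 < t ->
  exists r K, 0 < r <= 1/4 /\ r <= t /\ 0 < K /\ xy_jacobian_bound t r K.
Proof.
  intros Ht. set (s0 := t + T). set (S := s0 + 1). assert (HS : 0 <= S) by (unfold S, s0; lra).
  assert (Hc0 : 0 < - dsol 0 0 s0) by (pose proof (dsol_x_neg t Ht) as H; fold s0 in H; lra).
  set (c0 := - dsol 0 0 s0) in Hc0.
  destruct (dsol_bounded S HS) as (Cv & HCv & HVb).
  destruct (sol_lipschitz_param S HS) as (C & HC & HL).
  assert (Heve : at_right 0 (fun e => 0 < e /\ e <= 1/2 /\ (1 + 2 * Cv) * e <= c0 / 2)).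
  { repeat apply filter_and;
      [apply at_right_0_pos | apply at_right_0_le | apply at_right_0_mul_le]; lra. }
  destruct (filter_ex _ Heve) as (eps & He0 & He1 & He2).
  destruct (dsol_continuous S 0 s0 0 HS ltac:(rewrite Rabs_R0; lra) ltac:(unfold S, s0; lra)
    ltac:(lia) eps He0) as (dl & Hdl & HVc).
  assert (Hevr : at_right 0 (fun r => 0 < r /\ r <= 1/4 /\ r <= t /\ r <= dl /\ C * r <= eps)).
  { repeat apply filter_and;
      [apply at_right_0_pos | apply at_right_0_le .. | apply at_right_0_mul_le]; lra. }
  destruct (filter_ex _ Hevr) as (r & Hr0 & Hr1 & Hr2 & Hr3 & Hr4).
  set (K := 2 + 4 / c0 + 8 * Cv / c0).
  assert (HK : 0 < K).
  { unfold K. assert (0 < 4 / c0) by (apply Rdiv_lt_0_compat; lra).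
    assert (0 <= 8 * Cv / c0) by (apply Rmult_le_pos; [lra | left; apply Rinv_0_lt_compat; lra]).
    lra. }
  assert (Hdom : forall al s, near_regular t r al s -> 0 <= s <= S /\ Rabs al <= 1/4).
  { intros al s [H1 H2]. apply Rabs_def2 in H2. unfold S, s0 in *. lra. }
  assert (Hclose : forall j al s, (j < 5)%nat -> near_regular t r al s ->
    Rabs (sol j al s - sol j 0 s) <= eps).
  { intros j al s Hj Hn. destruct (Hdom al s Hn) as [Hs Hal].
    eapply Rle_trans; [apply HL; auto; rewrite ?Rabs_R0; lra|].
    rewrite Rminus_0_r. destruct Hn as [Hn _].
    assert (C * Rabs al <= C * r) by (apply Rmult_le_compat_l; lra). lra. }
  exists r, K. split; [lra|]. split; [lra|]. split; [exact HK|].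
  intros al1 s1 al2 s2 al3 s3 al4 s4 a b m N1 N2 N3 N4 HX HY.
  apply (perturbed_antidiagonal_inverse_bound c0 Cv eps (rhs 0 al1 s1) (dsol 0 al2 s2)
    (rhs 1 al3 s3) (dsol 1 al4 s4) (dsol 0 0 s0)); auto; try lra.
  - pose proof (Hclose 2%nat al1 s1 ltac:(lia) N1).
    rewrite (proj1 (proj2 (proj2 (sol_param_0 s1)))), Rminus_0_r in H. exact H.
  - destruct (Hdom al2 s2 N2) as [Hs2 _]. destruct N2 as [Ha2 Hs2'].
    apply HVc; [rewrite Rminus_0_r | unfold s0 |]; lra.
  - unfold c0. lra.
  - pose proof (Hclose 3%nat al3 s3 ltac:(lia) N3).
    rewrite (proj1 (proj2 (proj2 (proj2 (sol_param_0 s3))))) in H. exact H.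
  - destruct (Hdom al4 s4 N4) as [Hs4 Ha4]. apply HVb; auto; lra.
Qed.

Lemma sol_increment S j al1 s1 al2 s2 : 0 <= S -> (j < 5)%nat ->
  Rabs al1 <= 1/2 -> Rabs al2 <= 1/2 -> 0 <= s2 <= S -> exists xi eta,
  Rmin s2 s1 <= xi <= Rmax s2 s1 /\ Rmin al2 al1 <= eta <= Rmax al2 al1 /\
  sol j al1 s1 - sol j al2 s2 = rhs j al1 xi * (s1 - s2) + dsol j eta s2 * (al1 - al2).
Proof.
  intros HS Hj Ha1 Ha2 Hs2.
  destruct (MVT_is_derive (sol j al1) (rhs j al1) s2 s1 (fun x _ => sol_ode j al1 x))
    as [xi [Hxi E1]].
  destruct (MVT_is_derive (fun a => sol j a s2) (fun a => dsol j a s2) al2 al1) as [eta [Heta E2]].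
  { intros a Ha. apply (is_derive_sol_param S); auto.
    apply (Rabs_le_between_segment _ al2 al1); auto. }
  exists xi, eta. split; [exact Hxi|]. split; [exact Heta|].
  simpl in E2. lra.
Qed.

Lemma xy_coercive t r K : r <= 1/4 -> r <= t -> xy_jacobian_bound t r K ->
  forall p q, square (t, 0) r p -> square (t, 0) r q ->
  let m := Rmax (Rabs (sol 0 (snd p) (fst p + T) - sol 0 (snd q) (fst q + T)))
                (Rabs (sol 1 (snd p) (fst p + T) - sol 1 (snd q) (fst q + T))) in
  Rabs (fst p - fst q) <= K * m /\ Rabs (snd p - snd q) <= K * m.
Proof.
  intros Hr1 Hrt HJ [x1 y1] [x2 y2] [Hx1 Hy1] [Hx2 Hy2] m. simpl in *.
  rewrite Rminus_0_r in Hy1, Hy2.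
  set (s1 := x1 + T) in *. set (s2 := x2 + T) in *.
  assert (Hs : forall x, Rabs (x - t) < r -> Rabs (x + T - (t + T)) < r)
    by (intros x Hx; replace (x + T - (t + T)) with (x - t) by ring; exact Hx).
  assert (Hs1 := Hs x1 Hx1). assert (Hs2 := Hs x2 Hx2). fold s1 s2 in Hs1, Hs2.
  assert (Hs2' : 0 <= s2 <= t + T + 1) by (apply Rabs_def2 in Hs2; lra).
  destruct (sol_increment (t + T + 1) 0 y1 s1 y2 s2 ltac:(lra) ltac:(lia) ltac:(lra) ltac:(lra)
    Hs2')
    as (xi & eta & Hxi & Heta & E0).
  destruct (sol_increment (t + T + 1) 1 y1 s1 y2 s2 ltac:(lra) ltac:(lia) ltac:(lra) ltac:(lra)
    Hs2')
    as (xi' & eta' & Hxi' & Heta' & E1).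
  assert (Hxi_near : forall x, Rmin s2 s1 <= x <= Rmax s2 s1 -> near_regular t r y1 x)
    by (intros x Hx; split; [exact Hy1 | apply (Rabs_lt_between_segment s2 s1); auto]).
  assert (Heta_near : forall a, Rmin y2 y1 <= a <= Rmax y2 y1 -> near_regular t r a s2).
  { intros a Ha. split; [|exact Hs2]. rewrite <- (Rminus_0_r a).
    apply (Rabs_lt_between_segment y2 y1); auto; rewrite Rminus_0_r; auto. }
  replace (x1 - x2) with (s1 - s2) by (unfold s1, s2; ring).
  apply (HJ y1 xi eta s2 y1 xi' eta' s2); auto;
    [rewrite <- E0; apply Rmax_l | rewrite <- E1; apply Rmax_r].
Qed.

Lemma sol_filterdiff j x al : (j < 5)%nat -> Rabs al < 1/2 -> 0 < x + T ->
  filterdiff (fun q : R * R => sol j (snd q) (fst q + T)) (locally (x, al))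
    (fun q => plus (scal (fst q) (rhs j al (x + T))) (scal (snd q) (dsol j al (x + T)))).
Proof.
  intros Hj Hal Hx. set (S := x + T + 1). assert (HS : 0 <= S) by (unfold S; lra).
  destruct (rhs_lipschitz S HS) as (CF & HCF & HFc).
  apply (is_derive_filterdiff (fun a b => sol j b (a + T)) x al (fun a b => rhs j b (a + T))).
  - apply filter_forall. intros q. apply is_derive_shift, sol_ode.
  - apply (is_derive_sol_param S); unfold S; auto; lra.
  - apply (proj1 (continuity_2d_pt_filterlim (fun a b => rhs j b (a + T)) x al)). intros e.
    assert (Hev : at_right 0 (fun d => 0 < d /\ d <= x + T /\ d <= 1/2 /\ 2 * CF * d <= e / 2)).
    { pose proof (cond_pos e). repeat apply filter_and;
        [apply at_right_0_pos | apply at_right_0_le .. | apply at_right_0_mul_le]; lra. }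
    destruct (filter_ex _ Hev) as (d & Hd0 & Hd1 & Hd2 & Hd3).
    exists (mkposreal d Hd0). intros a b Ha Hb. simpl in Ha, Hb.
    assert (Hb1 : Rabs b <= 1).
    { replace b with ((b - al) + al) by ring. eapply Rle_trans; [apply Rabs_triang | lra]. }
    apply Rabs_def2 in Ha.
    assert (E := HFc al b j (x + T) (a + T) ltac:(lra) Hb1 Hj ltac:(unfold S; lra)
      ltac:(unfold S; lra)).
    replace (a + T - (x + T)) with (a - x) in E by ring.
    assert (Rabs (a - x) < d) by (apply Rabs_def1; lra).
    assert (CF * (Rabs (a - x) + Rabs (b - al)) <= CF * (2 * d))
      by (apply Rmult_le_compat_l; lra).
    pose proof (cond_pos e). lra.
Qed.

Lemma Phi_immersion t r K : r <= 1/4 -> r <= t -> xy_jacobian_bound t r K ->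
  forall p, square (t, 0) r p -> exists L : R * R -> R * R * R,
  is_linear L /\
  filterdiff (fun q => (sol 0 (snd q) (fst q + T), sol 1 (snd q) (fst q + T),
                        sol 4 (snd q) (fst q + T))) (locally p) L /\
  (forall v, L v = zero -> v = zero).
Proof.
  intros Hr1 Hrt HJ [x y] [Hx Hy]. simpl in Hx, Hy. rewrite Rminus_0_r in Hy.
  assert (Hnear : near_regular t r y (x + T))
    by (split; [exact Hy | replace (x + T - (t + T)) with (x - t) by ring; exact Hx]).
  assert (Hx0 : 0 < x + T) by (apply Rabs_def2 in Hx; lra).
  set (L := fun j (v : R * R) =>
    plus (scal (fst v) (rhs j y (x + T))) (scal (snd v) (dsol j y (x + T)))).
  assert (FD : forall j, (j < 5)%nat ->
    filterdiff (fun q : R * R => sol j (snd q) (fst q + T)) (locally (x, y)) (L j))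
    by (intros j Hj; apply sol_filterdiff; auto; lra).
  assert (FDall : filterdiff (fun q => (sol 0 (snd q) (fst q + T), sol 1 (snd q) (fst q + T),
      sol 4 (snd q) (fst q + T))) (locally (x, y)) (fun v => (L 0%nat v, L 1%nat v, L 4%nat v))).
  { assert (HF := @filter_filter _ _ (locally_filter (x, y))).
    assert (P01 := @filterdiff_pair R_AbsRing _ _ _ _ HF _ _ _ _
      (FD 0%nat ltac:(lia)) (FD 1%nat ltac:(lia))).
    exact (@filterdiff_pair R_AbsRing _ _ _ _ HF _ _ _ _ P01 (FD 4%nat ltac:(lia))). }
  exists (fun v => (L 0%nat v, L 1%nat v, L 4%nat v)).
  split; [exact (proj1 FDall)|]. split; [exact FDall|].
  intros [a b] Hv. injection Hv as H0 H1 _.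
  change (a * rhs 0 y (x + T) + b * dsol 0 y (x + T) = 0) in H0.
  change (a * rhs 1 y (x + T) + b * dsol 1 y (x + T) = 0) in H1.
  assert (Hz : forall u, u = 0 -> Rabs u <= 0) by (intros u ->; rewrite Rabs_R0; lra).
  destruct (HJ y (x + T) y (x + T) y (x + T) y (x + T) a b 0 Hnear Hnear Hnear Hnear)
    as [Ha Hb]; [apply Hz; lra | apply Hz; lra |].
  rewrite Rmult_0_r in Ha, Hb. apply Rabs_le_0_eq in Ha, Hb. subst. reflexivity.
Qed.

End Trajectories.

Theorem mainTheorem4
  (theta : R -> R) (Htheta : cutoff theta) (T : R) (HT : 0 < T)
  (X Y Z PX PY PZ : R -> R -> R)
  (Htraj : forall alpha : R,
      ham_traj theta (X alpha) (Y alpha) (Z alpha) (PX alpha) (PY alpha) (PZ alpha))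
  (Hinit : forall alpha : R,
      X alpha 0 = 0 /\ Y alpha 0 = - T /\ Z alpha 0 = 0 /\
      PX alpha 0 = 0 /\ PY alpha 0 = 1 /\ PZ alpha 0 = alpha)
  (t : R) (Ht : 0 < t) :
  let Phi := fun q : R * R =>
    (X (snd q) (fst q + T), Y (snd q) (fst q + T), Z (snd q) (fst q + T)) in
  exists U : R * R -> Prop, open U /\ U (t, 0) /\ embedding_on U Phi.
Proof.
  intros Phi.
  destruct (xy_jacobian_near theta Htheta T HT X Y Z PX PY PZ Htraj Hinit t Ht)
    as (r & K & [Hr0 Hr1] & Hrt & HK & HJ).
  exists (square (t, 0) r). split; [apply open_square|]. split; [apply square_center; lra|].
  split.
  - exact (Phi_immersion theta Htheta T HT X Y Z PX PY PZ Htraj Hinit t r K Hr1 Hrt HJ).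
  - apply (coercive_injective_inverse_continuous _ _ _ _ K HK).
    exact (xy_coercive theta Htheta T HT X Y Z PX PY PZ Htraj Hinit t r K Hr1 Hrt HJ).
Qed.
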